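(* Let $s_0\in(0,1)$, $0<\iota<\min\{s_0,1/3\}$, let $\omega$ satisfy condition (M) with parameter $\iota$ and in addition the $2s_0$-Dini condition, let $f(t)=t\omega(t)$ and $C>0$. Then there exists $t_0>0$ such that for every $s\in[s_0,1)$ there is a function $\zeta:[0,\infty)\to[0,\infty)$ with $\zeta\in C([0,\infty))\cap C^2((0,\infty))\cap C^3((0,2))$ satisfying (Z0)–(Z4) (for this $s$) and, for all $0<t<t_0$, $$C\Big(t^s+\omega(t)+\frac{\omega(f^{-1}(t))^{2s}-\omega(f^{-1}(t))}{1-2s}\Big)\le t\zeta'(t)\quad(s\neq1/2),$$ $$C\Big(t^{1/2}+\omega(t)+\omega(f^{-1}(t))\ln\frac{1}{\omega(f^{-1}(t))}\Big)\le t\zeta'(t)\quad(s=1/2).$$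
   Context: Condition (M) with parameter $\iota$: $\omega:[0,\infty)\to[0,\infty)$ is continuous, increasing and concave, $C^2$ on $(0,\infty)$, $\omega(0)=0$, $\int_0^1\omega(t)/t\,dt<\infty$, $\lim_{t\to\infty}\omega(t)/t$ finite, and there is $t_0>0$ with $\omega(t)/t^\iota$ decreasing on $(0,t_0)$ and $t^2\omega''(t)\ge-\omega(t)-3t\omega'(t)$ on $(0,t_0)$. The $2s$-Dini condition: $\int_0^1\frac{\omega(t)}{t}\frac{\omega(t)^{2s-1}-\omega(1)^{2s-1}}{1-2s}dt<\infty$ for $s\ne1/2$, and $\int_0^1\frac{\omega(t)}{t}\ln\frac{\omega(1)}{\omega(t)}dt<\infty$ for $s=1/2$. (Z0): $\zeta$ positive on $(0,\infty)$, increasing, concave, $\zeta(0)=0$. (Z1): there are $c_1>0$, $t_0\in(0,1)$ with $t^2\zeta'''(t)\ge-c_1\zeta'(t)$ for $0<t<t_0$. (Z2): $t\mapsto t\zeta'(t)$ nondecreasing on $(0,\infty)$. (Z3): there are $\iota>0$, $t_0>0$ such that $\zeta(t)/t^\iota$ is decreasing on $(0,t_0]$. (Z4): there is $c_2>0$ with $\zeta(t)\le c_2(1+t)^{s/2}$ for $t\ge0$. *)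

From Stdlib Require Import Reals Lra.
From Coquelicot Require Import Coquelicot.
Open Scope R_scope.

(* Functions are R -> R; only their values on [0,oo) matter. *)

Definition cont_on_nonneg (f : R -> R) : Prop :=
  forall t, 0 <= t -> filterlim f (within (fun y => 0 <= y) (locally t)) (locally (f t)).

Definition Ck_on (k : nat) (f : R -> R) (I : R -> Prop) : Prop :=
  (forall x, I x -> forall m, (m <= k)%nat -> ex_derive_n f m x) /\
  (forall x, I x -> continuous (Derive_n f k) x).

(* "increasing" = nondecreasing, "decreasing" = nonincreasing (on a set) *)
Definition nondecr_on (f : R -> R) (I : R -> Prop) : Prop :=
  forall x y, I x -> I y -> x <= y -> f x <= f y.
Definition nonincr_on (f : R -> R) (I : R -> Prop) : Prop :=
  forall x y, I x -> I y -> x <= y -> f y <= f x.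

Definition concave_on_nonneg (f : R -> R) : Prop :=
  forall x y l, 0 <= x -> 0 <= y -> 0 <= l <= 1 ->
    l * f x + (1 - l) * f y <= f (l * x + (1 - l) * y).

Definition cond_M (iota : R) (w : R -> R) : Prop :=
  cont_on_nonneg w /\
  (forall t, 0 <= t -> 0 <= w t) /\
  nondecr_on w (fun t => 0 <= t) /\
  concave_on_nonneg w /\
  Ck_on 2 w (fun t => 0 < t) /\
  w 0 = 0 /\
  (* int_0^1 w(t)/t dt < oo  (nonnegative integrand: improper integral converges) *)
  ex_RInt_gen (fun t => w t / t) (at_right 0) (at_point 1) /\
  (exists l : R, is_lim (fun t => w t / t) p_infty l) /\
  (exists t0, 0 < t0 /\
     nonincr_on (fun t => w t / Rpower t iota) (fun t => 0 < t < t0) /\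
     (forall t, 0 < t < t0 ->
        t ^ 2 * Derive_n w 2 t >= - w t - 3 * t * Derive w t)).

Definition dini2s (s : R) (w : R -> R) : Prop :=
  (s <> 1/2 ->
     ex_RInt_gen
       (fun t => w t / t * ((Rpower (w t) (2*s - 1) - Rpower (w 1) (2*s - 1)) / (1 - 2*s)))
       (at_right 0) (at_point 1)) /\
  (s = 1/2 ->
     ex_RInt_gen (fun t => w t / t * ln (w 1 / w t)) (at_right 0) (at_point 1)).

Definition condZ0 (z : R -> R) : Prop :=
  (forall t, 0 < t -> 0 < z t) /\
  nondecr_on z (fun t => 0 <= t) /\
  concave_on_nonneg z /\
  z 0 = 0.

Definition condZ1 (z : R -> R) : Prop :=
  exists c1 t0, 0 < c1 /\ 0 < t0 < 1 /\
    forall t, 0 < t < t0 -> t ^ 2 * Derive_n z 3 t >= - c1 * Derive z t.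

Definition condZ2 (z : R -> R) : Prop :=
  nondecr_on (fun t => t * Derive z t) (fun t => 0 < t).

Definition condZ3 (z : R -> R) : Prop :=
  exists iota t0, 0 < iota /\ 0 < t0 /\
    nonincr_on (fun t => z t / Rpower t iota) (fun t => 0 < t <= t0).

Definition condZ4 (s : R) (z : R -> R) : Prop :=
  exists c2, 0 < c2 /\ forall t, 0 <= t -> z t <= c2 * Rpower (1 + t) (s / 2).

(* Take [zeta(t) = 2 A int_0^(sqrt t) L(w(v)) dv / v + ln (1 + t)], so that
   [t zeta'(t) = A L(w(sqrt t)) + t / (1 + t)].  The profile [L] is [x/(1+x)],
   [x/(1+x) (1 + ln ((1+x)/x))] or [(x/(1+x))^(2 s0)] according as [s0 > 1/2],
   [s0 = 1/2] or [s0 < 1/2]: it is increasing and bounded with [L(x)/x]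
   decreasing and [x^2 L'' >= - c L], which together with condition (M) yields
   (Z0)-(Z4); it dominates [x] and [(x^(2s) - x)/(1 - 2s)] (resp. [x ln(1/x)])
   uniformly for [s] in [[s0, 1)]; and the 2s0-Dini condition is what makes the
   integral finite.  For the lower bound, [w(t)/t^iota] decreasing gives
   [w(sqrt t) >= c t^(iota/2) >= c t^s], and [u w(u) = t] forces [u <= K sqrt t],
   hence [L(w(u)) <= K L(w(sqrt t))].  A modulus vanishing somewhere vanishes
   identically, and then [zeta(t) = ln (1 + t)] will do. *)

From Stdlib Require Import Reals Lra Lia Classical.
From Coquelicot Require Import Coquelicot.
Open Scope R_scope.

Lemma mvt_open (f df : R -> R) (a b : R) :
  a < b ->
  (forall c, a < c < b -> is_derive f c (df c)) ->
  (forall c, a <= c <= b -> continuity_pt f c) ->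
  exists c, a < c < b /\ f b - f a = df c * (b - a).
Proof.
  intros Hab Hd Hc.
  assert (pr1 : forall c, a < c < b -> derivable_pt f c).
  { intros c Hc'. exists (df c). apply is_derive_Reals. now apply Hd. }
  assert (pr2 : forall c, a < c < b -> derivable_pt id c).
  { intros c _. apply derivable_pt_id. }
  destruct (MVT f id a b pr1 pr2 Hab Hc) as [c [P HP]].
  { intros c _. apply derivable_continuous_pt, derivable_pt_id. }
  exists c; split; [exact P|].
  rewrite (derive_pt_eq_0 f c (df c) (pr1 c P)) in HP
    by (apply is_derive_Reals; now apply Hd).
  rewrite (derive_pt_eq_0 id c 1 (pr2 c P)) in HP by apply derivable_pt_lim_id.
  unfold id in HP. lra.
Qed.

Lemma le_of_derive_nonneg (f df : R -> R) (a b : R) :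
  a <= b ->
  (forall c, a < c < b -> is_derive f c (df c)) ->
  (forall c, a < c < b -> 0 <= df c) ->
  (forall c, a <= c <= b -> continuity_pt f c) ->
  f a <= f b.
Proof.
  intros Hab Hd Hp Hc. destruct (Req_dec a b) as [->|Hne]; [lra|].
  destruct (mvt_open f df a b) as [c [Hc1 Hc2]]; auto; try lra.
  specialize (Hp c Hc1). nra.
Qed.

Lemma concave_on_nonneg_of_derive_nonincr (z dz : R -> R) :
  (forall x, 0 <= x -> continuity_pt z x) ->
  (forall x, 0 < x -> is_derive z x (dz x)) ->
  (forall x y, 0 < x -> x <= y -> dz y <= dz x) ->
  concave_on_nonneg z.
Proof.
  intros Hc Hd Hm.
  assert (key : forall x y l, 0 <= x -> x < y -> 0 < l < 1 ->
    l * z x + (1 - l) * z y <= z (l * x + (1 - l) * y)).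
  { intros x y l Hx Hxy Hl. set (m := l * x + (1 - l) * y).
    destruct (mvt_open z dz x m) as [c1 [Hc1 E1]]; unfold m in *; try nra.
    { intros c Hc'. apply Hd. lra. }
    { intros c Hc'. apply Hc. lra. }
    destruct (mvt_open z dz m y) as [c2 [Hc2 E2]]; unfold m in *; try nra.
    { intros c Hc'. apply Hd. lra. }
    { intros c Hc'. apply Hc. nra. }
    assert (dz c2 <= dz c1) by (apply Hm; nra).
    replace (l * x + (1 - l) * y - x) with ((1 - l) * (y - x)) in E1 by ring.
    replace (y - (l * x + (1 - l) * y)) with (l * (y - x)) in E2 by ring.
    assert (0 <= l * (1 - l) * (y - x) * (dz c1 - dz c2)).
    { apply Rmult_le_pos; [|lra]. apply Rmult_le_pos; [|lra]. nra. }
    nra. }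
  intros x y l Hx Hy Hl.
  destruct (Req_dec l 0) as [->|Hl0].
  { replace (0 * x + (1 - 0) * y) with y by ring. lra. }
  destruct (Req_dec l 1) as [->|Hl1].
  { replace (1 * x + (1 - 1) * y) with x by ring. lra. }
  destruct (Rtotal_order x y) as [Hxy|[<-|Hxy]].
  - apply key; lra.
  - replace (l * x + (1 - l) * x) with x by ring. lra.
  - pose proof (key y x (1 - l) Hy Hxy ltac:(lra)).
    replace (l * x + (1 - l) * y) with ((1 - l) * y + (1 - (1 - l)) * x) by ring.
    lra.
Qed.

Lemma derive_le_of_left_quotients (f : R -> R) (x l M : R) :
  is_derive f x l ->
  (exists d, 0 < d /\ forall h, 0 < h < d -> (f x - f (x - h)) / h <= M) ->
  l <= M.
Proof.
  intros Hd [d [Hd0 Hq]]. apply is_derive_Reals in Hd.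
  destruct (Rle_or_lt l M) as [|Hlt]; [assumption|exfalso].
  destruct (Hd (l - M) ltac:(lra)) as [[del Hdel0] Hdel]; simpl in Hdel.
  set (h := Rmin (del / 2) (d / 2)).
  assert (Hh1 : h <= del / 2) by apply Rmin_l.
  assert (Hh2 : h <= d / 2) by apply Rmin_r.
  assert (Hh : 0 < h) by (apply Rmin_pos; lra).
  specialize (Hdel (- h) ltac:(lra) ltac:(rewrite Rabs_Ropp, Rabs_right; lra)).
  specialize (Hq h ltac:(lra)).
  replace ((f (x + - h) - f x) / - h) with ((f x - f (x - h)) / h) in Hdel
    by (unfold Rminus; field; lra).
  apply Rabs_def2 in Hdel. lra.
Qed.

Lemma derive_ge_of_right_quotients (f : R -> R) (x l M : R) :
  is_derive f x l ->
  (exists d, 0 < d /\ forall h, 0 < h < d -> M <= (f (x + h) - f x) / h) ->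
  M <= l.
Proof.
  intros Hd [d [Hd0 Hq]]. apply is_derive_Reals in Hd.
  destruct (Rle_or_lt M l) as [|Hlt]; [assumption|exfalso].
  destruct (Hd (M - l) ltac:(lra)) as [[del Hdel0] Hdel]; simpl in Hdel.
  set (h := Rmin (del / 2) (d / 2)).
  assert (Hh1 : h <= del / 2) by apply Rmin_l.
  assert (Hh2 : h <= d / 2) by apply Rmin_r.
  assert (Hh : 0 < h) by (apply Rmin_pos; lra).
  specialize (Hdel h ltac:(lra) ltac:(rewrite Rabs_right; lra)).
  specialize (Hq h ltac:(lra)).
  apply Rabs_def2 in Hdel. lra.
Qed.

Lemma locally_pos (t : R) : 0 < t -> locally t (fun y => 0 < y).
Proof.
  intros Ht. exists (mkposreal t Ht). intros y Hy.
  apply Rabs_def2 in Hy. simpl in Hy. unfold minus, plus, opp in Hy; simpl in Hy. lra.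
Qed.

Lemma Derive_n_S_pos (f g g' : R -> R) (n : nat) (t : R) :
  0 < t -> (forall x, 0 < x -> Derive_n f n x = g x) -> is_derive g t (g' t) ->
  Derive_n f (S n) t = g' t.
Proof.
  intros Ht Hn Hg. simpl. rewrite (Derive_ext_loc _ g).
  - now apply is_derive_unique.
  - generalize (locally_pos t Ht). apply filter_imp. intros; auto.
Qed.

Lemma ex_derive_n_S_pos (f g g' : R -> R) (n : nat) (t : R) :
  0 < t -> (forall x, 0 < x -> Derive_n f n x = g x) -> is_derive g t (g' t) ->
  ex_derive_n f (S n) t.
Proof.
  intros Ht Hn Hg. simpl. apply (ex_derive_ext_loc g).
  - generalize (locally_pos t Ht). apply filter_imp. intros; symmetry; auto.
  - now exists (g' t).
Qed.

Lemma Ck_on_of_derive_chain (f g1 g2 g3 : R -> R) (I : R -> Prop) :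
  (forall x, I x -> 0 < x) ->
  (forall x, 0 < x -> is_derive f x (g1 x)) ->
  (forall x, 0 < x -> is_derive g1 x (g2 x)) ->
  (forall x, 0 < x -> is_derive g2 x (g3 x)) ->
  (forall x, 0 < x -> continuous g3 x) ->
  Ck_on 2 f I /\ Ck_on 3 f I.
Proof.
  intros HI H1 H2 H3 Hc.
  assert (E1 : forall x, 0 < x -> Derive_n f 1 x = g1 x)
    by (intros x Hx; apply (Derive_n_S_pos f f g1 0); auto).
  assert (E2 : forall x, 0 < x -> Derive_n f 2 x = g2 x)
    by (intros x Hx; apply (Derive_n_S_pos f g1 g2 1); auto).
  assert (E3 : forall x, 0 < x -> Derive_n f 3 x = g3 x)
    by (intros x Hx; apply (Derive_n_S_pos f g2 g3 2); auto).
  assert (Hex : forall x, 0 < x -> forall m, (m <= 3)%nat -> ex_derive_n f m x).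
  { intros x Hx [|[|[|[|m]]]] Hm; try lia.
    - exact Logic.I.
    - apply (ex_derive_n_S_pos f f g1 0); auto.
    - apply (ex_derive_n_S_pos f g1 g2 1); auto.
    - apply (ex_derive_n_S_pos f g2 g3 2); auto. }
  assert (Hcont : forall k g, (forall x, 0 < x -> Derive_n f k x = g x) ->
    (forall x, 0 < x -> continuous g x) -> forall x, I x -> continuous (Derive_n f k) x).
  { intros k g Ek Hg x Hx. apply HI in Hx. apply (continuous_ext_loc _ g).
    - generalize (locally_pos x Hx). apply filter_imp. intros; symmetry; auto.
    - auto. }
  split; split.
  - intros x Hx m Hm. apply Hex; [auto|lia].
  - apply (Hcont 2%nat g2 E2). intros x Hx.
    apply (ex_derive_continuous g2). exists (g3 x); auto.
  - intros x Hx m Hm. apply Hex; auto.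
  - exact (Hcont 3%nat g3 E3 Hc).
Qed.

Lemma concave_ratio_nonincr (f : R -> R) (x y : R) :
  concave_on_nonneg f -> f 0 = 0 -> 0 < x -> x <= y -> f y / y <= f x / x.
Proof.
  intros Hcc H0 Hx Hxy.
  assert (Hl : 0 <= x / y <= 1).
  { split; [apply Rdiv_le_0_compat; lra|].
    apply Rmult_le_reg_r with y; [lra|]. field_simplify; lra. }
  pose proof (Hcc y 0 (x / y) ltac:(lra) ltac:(lra) Hl) as H.
  replace (x / y * y + (1 - x / y) * 0) with x in H by (field; lra).
  rewrite H0, Rmult_0_r, Rplus_0_r in H.
  apply Rmult_le_reg_r with (x * y); [nra|].
  replace (f y / y * (x * y)) with (x / y * f y * y) by (field; lra).
  replace (f x / x * (x * y)) with (f x * y) by (field; lra).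
  apply Rmult_le_compat_r; lra.
Qed.

(* [auto_derive] leaves derivatives of abstract functions eta-expanded. *)
Lemma Derive_eta_unique (f : R -> R) (x l : R) :
  is_derive f x l -> Derive (fun y => f y) x = l.
Proof. apply is_derive_unique. Qed.

Record modulus (w : R -> R) : Prop := {
  modulus_nonneg : forall x, 0 <= x -> 0 <= w x;
  modulus_nondecr : nondecr_on w (fun t => 0 <= t);
  modulus_concave : concave_on_nonneg w;
  modulus_0 : w 0 = 0;
  modulus_ex_derive : forall x, 0 < x -> ex_derive w x;
  modulus_ex_derive2 : forall x, 0 < x -> ex_derive (Derive w) x;
  modulus_derive2_cont : forall x, 0 < x -> continuous (Derive_n w 2) x }.

Lemma modulus_of_cond_M (iota : R) (w : R -> R) : cond_M iota w -> modulus w.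
Proof.
  intros (_ & Hp & Hn & Hcc & [Hd Hd2] & H0 & _).
  split; auto.
  - intros x Hx. exact (Hd x Hx 1%nat ltac:(lia)).
  - intros x Hx. exact (Hd x Hx 2%nat ltac:(lia)).
Qed.

Section Modulus.

Variable w : R -> R.
Hypothesis Hw : modulus w.

Lemma modulus_continuous (x : R) : 0 < x -> continuous w x.
Proof. intros Hx. apply (ex_derive_continuous (V := R_NormedModule)). now apply (modulus_ex_derive w Hw). Qed.

Lemma modulus_is_derive (x : R) : 0 < x -> is_derive w x (Derive w x).
Proof. intros Hx. apply Derive_correct. now apply (modulus_ex_derive w Hw). Qed.

Lemma modulus_is_derive2 (x : R) : 0 < x -> is_derive (Derive w) x (Derive_n w 2 x).
Proof. intros Hx. apply Derive_correct. now apply (modulus_ex_derive2 w Hw). Qed.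

Lemma modulus_ratio_nonincr (x y : R) : 0 < x -> x <= y -> w y / y <= w x / x.
Proof. apply concave_ratio_nonincr; [apply Hw | apply Hw]. Qed.

Lemma modulus_derive_nonneg (x : R) : 0 < x -> 0 <= Derive w x.
Proof.
  intros Hx. apply (derive_ge_of_right_quotients w x); [now apply modulus_is_derive|].
  exists 1; split; [lra|]. intros h Hh.
  assert (w x <= w (x + h)) by (apply Hw; simpl; lra).
  apply Rdiv_le_0_compat; lra.
Qed.

Lemma modulus_x_derive_le (x : R) : 0 < x -> x * Derive w x <= w x.
Proof.
  intros Hx.
  assert (Derive w x <= w x / x).
  { apply (derive_le_of_left_quotients w x); [now apply modulus_is_derive|].
    exists x; split; [lra|]. intros h Hh.
    pose proof (modulus_ratio_nonincr (x - h) x ltac:(lra) ltac:(lra)) as Hc.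
    assert (w x * (x - h) <= w (x - h) * x).
    { apply Rmult_le_reg_r with (/ (x * (x - h))); [apply Rinv_0_lt_compat; nra|].
      replace (w x * (x - h) * / (x * (x - h))) with (w x / x) by (field; lra).
      replace (w (x - h) * x * / (x * (x - h))) with (w (x - h) / (x - h)) by (field; lra).
      lra. }
    apply Rmult_le_reg_r with (h * x); [nra|].
    replace ((w x - w (x - h)) / h * (h * x)) with (x * w x - x * w (x - h)) by (field; lra).
    replace (w x / x * (h * x)) with (h * w x) by (field; lra).
    nra. }
  apply Rmult_le_compat_l with (r := x) in H; [|lra].
  replace (x * (w x / x)) with (w x) in H by (field; lra). lra.
Qed.

Lemma modulus_scale (x K : R) : 0 <= x -> 1 <= K -> w (K * x) <= K * w x.
Proof.
  intros Hx HK. destruct (Req_dec x 0) as [->|Hx0].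
  - rewrite Rmult_0_r, (modulus_0 w Hw). lra.
  - pose proof (modulus_ratio_nonincr x (K * x) ltac:(lra) ltac:(nra)).
    apply Rmult_le_reg_r with (/ (K * x)); [apply Rinv_0_lt_compat; nra|].
    replace (K * w x * / (K * x)) with (w x / x) by (field; lra). exact H.
Qed.

Lemma modulus_zero_or_pos :
  (forall x, 0 <= x -> w x = 0) \/ (forall x, 0 < x -> 0 < w x).
Proof.
  destruct (classic (exists v, 0 < v /\ w v = 0)) as [[v [Hv Hwv]]|Hno].
  - left. intros x Hx. pose proof (modulus_nonneg w Hw x Hx).
    destruct (Rle_or_lt x v).
    + assert (w x <= w v) by (apply Hw; simpl; lra). lra.
    + pose proof (modulus_ratio_nonincr v x Hv ltac:(lra)) as Hr.
      rewrite Hwv in Hr. unfold Rdiv in Hr at 2. rewrite Rmult_0_l in Hr.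
      assert (0 <= w x / x) by (apply Rdiv_le_0_compat; lra).
      replace (w x) with (w x / x * x) by (field; lra).
      replace (w x / x) with 0 by lra. ring.
  - right. intros x Hx. pose proof (modulus_nonneg w Hw x ltac:(lra)).
    destruct (Req_dec (w x) 0); [|lra]. exfalso. apply Hno. now exists x.
Qed.

End Modulus.

Record zeta_data (zw Q Q1 Q2 : R -> R) : Prop := {
  zw_nonpos : forall t, t <= 0 -> zw t = 0;
  zw_cont0 : continuity_pt zw 0;
  zw_derive : forall t, 0 < t -> is_derive zw t (Q t / t);
  Q_derive : forall t, 0 < t -> is_derive Q t (Q1 t);
  Q1_derive : forall t, 0 < t -> is_derive Q1 t (Q2 t);
  Q2_cont : forall t, 0 < t -> continuous Q2 t;
  Q_nonneg : forall t, 0 < t -> 0 <= Q t;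
  Q_nondecr : forall x y, 0 < x -> x <= y -> Q x <= Q y;
  Q_ratio_nonincr : forall x y, 0 < x -> x <= y -> Q y / y <= Q x / x;
  Q1_le : forall t, 0 < t -> t * Q1 t <= Q t;
  Q2_lower : exists c t1, 0 < c /\ 0 < t1 < 1 /\
    forall t, 0 < t < t1 -> - c * Q t <= t ^ 2 * Q2 t;
  zw_log_bound : exists B, forall t, 0 < t -> zw t <= B + B * ln (1 + t) }.

Definition zeta_of (zw : R -> R) (t : R) : R := zw t + ln (1 + t).

Definition zeta_d1 (Q : R -> R) (t : R) : R := Q t / t + / (1 + t).
Definition zeta_d2 (Q Q1 : R -> R) (t : R) : R := Q1 t / t - Q t / t ^ 2 - / (1 + t) ^ 2.
Definition zeta_d3 (Q Q1 Q2 : R -> R) (t : R) : R :=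
  Q2 t / t - 2 * Q1 t / t ^ 2 + 2 * Q t / t ^ 3 + 2 / (1 + t) ^ 3.

Definition zeta_admissible (s : R) (z : R -> R) : Prop :=
  (forall t, 0 <= t -> 0 <= z t) /\
  cont_on_nonneg z /\
  Ck_on 2 z (fun t => 0 < t) /\
  Ck_on 3 z (fun t => 0 < t < 2) /\
  condZ0 z /\ condZ1 z /\ condZ2 z /\ condZ3 z /\ condZ4 s z.

Lemma condZ3_of_concave (z : R -> R) : concave_on_nonneg z -> z 0 = 0 -> condZ3 z.
Proof.
  intros Hcc H0. exists 1, 1. split; [lra|]. split; [lra|].
  intros x y Hx Hy Hxy. simpl in Hx, Hy. rewrite !Rpower_1 by lra.
  now apply concave_ratio_nonincr.
Qed.

Lemma ln1p_le_rpow (s t : R) : 0 < s -> 0 <= t -> ln (1 + t) <= 2 / s * Rpower (1 + t) (s / 2).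
Proof.
  intros Hs Ht.
  pose proof (exp_ineq1_le (s / 2 * ln (1 + t))) as H.
  fold (Rpower (1 + t) (s / 2)) in H.
  apply Rmult_le_reg_l with (s / 2); [lra|].
  replace (s / 2 * (2 / s * Rpower (1 + t) (s / 2))) with (Rpower (1 + t) (s / 2)) by (field; lra).
  lra.
Qed.

Lemma one_le_rpow_1p (s t : R) : 0 <= s -> 0 <= t -> 1 <= Rpower (1 + t) (s / 2).
Proof.
  intros Hs Ht. unfold Rpower.
  assert (0 <= s / 2 * ln (1 + t)).
  { apply Rmult_le_pos; [lra|]. rewrite <- ln_1. apply ln_le; lra. }
  pose proof (exp_ineq1_le (s / 2 * ln (1 + t))). lra.
Qed.

Lemma condZ4_of_log_bound (s B : R) (z : R -> R) : 0 < s -> 0 <= B ->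
  (forall t, 0 <= t -> z t <= B + B * ln (1 + t)) -> condZ4 s z.
Proof.
  intros Hs HB Hz. exists (B + B * (2 / s) + 1). split.
  { assert (0 <= B * (2 / s)) by (apply Rmult_le_pos; [lra|apply Rlt_le, Rdiv_lt_0_compat; lra]).
    lra. }
  intros t Ht. specialize (Hz t Ht).
  pose proof (ln1p_le_rpow s t Hs Ht). pose proof (one_le_rpow_1p s t ltac:(lra) Ht).
  set (P := Rpower (1 + t) (s / 2)) in *.
  assert (0 <= 2 / s) by (apply Rlt_le, Rdiv_lt_0_compat; lra).
  assert (B * ln (1 + t) <= B * (2 / s * P)) by (apply Rmult_le_compat_l; lra).
  nra.
Qed.

Section ZetaOfData.

Variables zw Q Q1 Q2 : R -> R.
Hypothesis HZ : zeta_data zw Q Q1 Q2.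

Let z := zeta_of zw.

Lemma is_derive_zeta (t : R) : 0 < t -> is_derive z t (zeta_d1 Q t).
Proof.
  intros Ht. unfold z, zeta_of, zeta_d1. auto_derive.
  - split; [exists (Q t / t); now apply (zw_derive _ _ _ _ HZ)|]. lra.
  - rewrite (Derive_eta_unique zw t (Q t / t)) by now apply (zw_derive _ _ _ _ HZ).
    field. lra.
Qed.

Lemma is_derive_zeta_d1 (t : R) : 0 < t -> is_derive (zeta_d1 Q) t (zeta_d2 Q Q1 t).
Proof.
  intros Ht. pose proof (Q_derive _ _ _ _ HZ t Ht) as HQ.
  unfold zeta_d1, zeta_d2. auto_derive.
  - repeat split; try lra. now exists (Q1 t).
  - rewrite (Derive_eta_unique Q t (Q1 t) HQ). field. lra.
Qed.

Lemma is_derive_zeta_d2 (t : R) : 0 < t -> is_derive (zeta_d2 Q Q1) t (zeta_d3 Q Q1 Q2 t).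
Proof.
  intros Ht. pose proof (Q_derive _ _ _ _ HZ t Ht) as HQ.
  pose proof (Q1_derive _ _ _ _ HZ t Ht) as HQ1.
  unfold zeta_d2, zeta_d3. auto_derive.
  - repeat split; first [exists (Q2 t); exact HQ1 | exists (Q1 t); exact HQ | nra].
  - rewrite (Derive_eta_unique Q t (Q1 t) HQ), (Derive_eta_unique Q1 t (Q2 t) HQ1).
    field. lra.
Qed.

Lemma continuous_zeta_d3 (t : R) : 0 < t -> continuous (zeta_d3 Q Q1 Q2) t.
Proof.
  intros Ht.
  assert (cQ : continuous Q t)
    by (apply (ex_derive_continuous (V := R_NormedModule)); exists (Q1 t); now apply HZ).
  assert (cQ1 : continuous Q1 t)
    by (apply (ex_derive_continuous (V := R_NormedModule)); exists (Q2 t); now apply HZ).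
  assert (cQ2 : continuous Q2 t) by now apply HZ.
  assert (cI : forall n, continuous (fun y => / y ^ n) t).
  { intros n. apply (ex_derive_continuous (V := R_NormedModule)). auto_derive.
    apply pow_nonzero; lra. }
  assert (cJ : continuous (fun y => 2 / (1 + y) ^ 3) t).
  { apply (ex_derive_continuous (V := R_NormedModule)). auto_derive.
    pose proof (pow_lt (1 + t) 3 ltac:(lra)). simpl in *. lra. }
  unfold zeta_d3.
  apply (continuous_ext (fun y => Q2 y * / y ^ 1 + (-2) * (Q1 y * / y ^ 2)
                                  + 2 * (Q y * / y ^ 3) + 2 / (1 + y) ^ 3)).
  { intros y. unfold Rdiv. rewrite pow_1. simpl. ring. }
  assert (cM : forall f g : R -> R, continuous f t -> continuous g t ->
    continuous (fun y => f y * g y) t) by (intros; now apply (continuous_mult f g)).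
  assert (cP : forall f g : R -> R, continuous f t -> continuous g t ->
    continuous (fun y => f y + g y) t) by (intros; now apply (continuous_plus f g)).
  assert (cC : forall c : R, continuous (fun _ => c) t) by (intros; apply continuous_const).
  apply cP; [apply cP; [apply cP|]|]; auto; repeat apply cM; auto.
Qed.

Lemma Derive_zeta (t : R) : 0 < t -> Derive z t = zeta_d1 Q t.
Proof. intros Ht. apply is_derive_unique. now apply is_derive_zeta. Qed.

Lemma Derive_n3_zeta (t : R) : 0 < t -> Derive_n z 3 t = zeta_d3 Q Q1 Q2 t.
Proof.
  intros Ht. apply (Derive_n_S_pos z (zeta_d2 Q Q1)); auto; [|now apply is_derive_zeta_d2].
  intros x Hx. apply (Derive_n_S_pos z (zeta_d1 Q)); auto; [|now apply is_derive_zeta_d1].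
  intros y Hy. now apply Derive_zeta.
Qed.

Lemma zeta_continuity_pt (x : R) : 0 <= x -> continuity_pt z x.
Proof.
  intros Hx. destruct (Rle_lt_or_eq_dec 0 x Hx) as [Hp|<-].
  - apply continuity_pt_filterlim, (ex_derive_continuous (V := R_NormedModule)).
    exists (zeta_d1 Q x). now apply is_derive_zeta.
  - apply (continuity_pt_plus zw (fun t => ln (1 + t))); [apply HZ|].
    apply continuity_pt_filterlim,
      (ex_derive_continuous (V := R_NormedModule) (fun t => ln (1 + t))).
    auto_derive. lra.
Qed.

Lemma zeta_d1_nonneg (x : R) : 0 < x -> 0 <= zeta_d1 Q x.
Proof.
  intros Hx. unfold zeta_d1. pose proof (Q_nonneg _ _ _ _ HZ x Hx).
  assert (0 <= Q x / x) by (apply Rdiv_le_0_compat; lra).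
  assert (0 < / (1 + x)) by (apply Rinv_0_lt_compat; lra). lra.
Qed.

Lemma zeta_nondecr (x y : R) : 0 <= x -> x <= y -> z x <= z y.
Proof.
  intros Hx Hxy. apply (le_of_derive_nonneg z (zeta_d1 Q)); auto.
  - intros u Hu. apply is_derive_zeta. lra.
  - intros u Hu. apply zeta_d1_nonneg. lra.
  - intros u Hu. apply zeta_continuity_pt. lra.
Qed.

Lemma zeta_concave : concave_on_nonneg z.
Proof.
  apply (concave_on_nonneg_of_derive_nonincr z (zeta_d1 Q)).
  - exact zeta_continuity_pt.
  - exact is_derive_zeta.
  - intros x y Hx Hxy. unfold zeta_d1. pose proof (Q_ratio_nonincr _ _ _ _ HZ x y Hx Hxy).
    assert (/ (1 + y) <= / (1 + x)) by (apply Rinv_le_contravar; lra). lra.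
Qed.

Lemma zeta_0 : z 0 = 0.
Proof. unfold z, zeta_of. rewrite (zw_nonpos _ _ _ _ HZ) by lra. rewrite Rplus_0_r, ln_1. ring. Qed.

Lemma zw_nonneg (t : R) : 0 <= t -> 0 <= zw t.
Proof.
  intros Ht. rewrite <- (zw_nonpos _ _ _ _ HZ 0) by lra.
  apply (le_of_derive_nonneg zw (fun x => Q x / x)); auto.
  - intros u Hu. apply HZ. lra.
  - intros u Hu. apply Rdiv_le_0_compat; [apply HZ|]; lra.
  - intros u Hu. destruct (Rle_lt_or_eq_dec 0 u ltac:(lra)) as [Hu0|<-]; [|apply HZ].
    apply continuity_pt_filterlim, (ex_derive_continuous (V := R_NormedModule)).
    exists (Q u / u). apply HZ. lra.
Qed.

Lemma zeta_condZ0 : condZ0 z.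
Proof.
  split; [|split; [|split]].
  - intros t Ht. unfold z, zeta_of. pose proof (zw_nonneg t ltac:(lra)).
    assert (0 < ln (1 + t)) by (rewrite <- ln_1; apply ln_increasing; lra). lra.
  - intros x y Hx _ Hxy. now apply zeta_nondecr.
  - exact zeta_concave.
  - exact zeta_0.
Qed.

Lemma zeta_condZ1 : condZ1 z.
Proof.
  destruct (Q2_lower _ _ _ _ HZ) as [c [t1 [Hc [Ht1 HQ2]]]].
  exists c, t1. split; [auto|]. split; [auto|]. intros t Ht.
  rewrite Derive_zeta, Derive_n3_zeta by lra. unfold zeta_d1, zeta_d3.
  specialize (HQ2 t Ht). pose proof (Q1_le _ _ _ _ HZ t ltac:(lra)).
  pose proof (Q_nonneg _ _ _ _ HZ t ltac:(lra)).
  replace (t ^ 2 * (Q2 t / t - 2 * Q1 t / t ^ 2 + 2 * Q t / t ^ 3 + 2 / (1 + t) ^ 3))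
    with ((t ^ 2 * Q2 t) / t + 2 * (Q t - t * Q1 t) / t + 2 * t ^ 2 / (1 + t) ^ 3)
    by (field; lra).
  assert (0 <= 2 * (Q t - t * Q1 t) / t) by (apply Rdiv_le_0_compat; lra).
  assert (0 <= 2 * t ^ 2 / (1 + t) ^ 3) by (apply Rdiv_le_0_compat; [nra|apply pow_lt; lra]).
  assert (- c * Q t / t <= t ^ 2 * Q2 t / t)
    by (apply Rmult_le_compat_r; [left; apply Rinv_0_lt_compat|]; lra).
  assert (0 <= c * / (1 + t)) by (apply Rmult_le_pos; [lra|left; apply Rinv_0_lt_compat; lra]).
  replace (- c * (Q t / t + / (1 + t))) with (- c * Q t / t - c * / (1 + t)) by (field; lra).
  lra.
Qed.

Lemma t_Derive_zeta (t : R) : 0 < t -> t * Derive z t = Q t + t / (1 + t).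
Proof. intros Ht. rewrite Derive_zeta by lra. unfold zeta_d1. field. lra. Qed.

Lemma zeta_condZ2 : condZ2 z.
Proof.
  intros x y Hx Hy Hxy. simpl in Hx, Hy. rewrite !t_Derive_zeta by lra.
  pose proof (Q_nondecr _ _ _ _ HZ x y Hx Hxy).
  assert (x / (1 + x) <= y / (1 + y)).
  { apply Rmult_le_reg_r with ((1 + x) * (1 + y)); [nra|].
    replace (x / (1 + x) * ((1 + x) * (1 + y))) with (x * (1 + y)) by (field; lra).
    replace (y / (1 + y) * ((1 + x) * (1 + y))) with (y * (1 + x)) by (field; lra). nra. }
  lra.
Qed.

Lemma zeta_condZ4 (s : R) : 0 < s -> condZ4 s z.
Proof.
  intros Hs. destruct (zw_log_bound _ _ _ _ HZ) as [B HB].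
  apply (condZ4_of_log_bound s (Rabs B + 1)); [auto|pose proof (Rabs_pos B); lra|].
  intros t Ht. unfold z, zeta_of.
  assert (0 <= ln (1 + t)) by (rewrite <- ln_1; apply ln_le; lra).
  destruct (Rle_lt_or_eq_dec 0 t Ht) as [Htp|<-].
  - specialize (HB t Htp). pose proof (Rle_abs B).
    assert (B * ln (1 + t) <= Rabs B * ln (1 + t)) by (apply Rmult_le_compat_r; lra). nra.
  - rewrite (zw_nonpos _ _ _ _ HZ) by lra. rewrite Rplus_0_r, ln_1.
    pose proof (Rabs_pos B). lra.
Qed.

Lemma zeta_of_data_admissible (s : R) : 0 < s -> zeta_admissible s z.
Proof.
  intros Hs.
  destruct (Ck_on_of_derive_chain z (zeta_d1 Q) (zeta_d2 Q Q1) (zeta_d3 Q Q1 Q2)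
              (fun t => 0 < t) (fun _ H => H) is_derive_zeta is_derive_zeta_d1
              is_derive_zeta_d2 continuous_zeta_d3) as [Ck2 _].
  destruct (Ck_on_of_derive_chain z (zeta_d1 Q) (zeta_d2 Q Q1) (zeta_d3 Q Q1 Q2)
              (fun t => 0 < t < 2) (fun _ H => proj1 H) is_derive_zeta is_derive_zeta_d1
              is_derive_zeta_d2 continuous_zeta_d3) as [_ Ck3].
  split; [|split; [|split; [|split; [|split; [|split; [|split; [|split]]]]]]].
  - intros t Ht. rewrite <- zeta_0. now apply zeta_nondecr.
  - intros t Ht. apply (filterlim_filter_le_1 (F := locally t)); [apply filter_le_within|].
    apply continuity_pt_filterlim. now apply zeta_continuity_pt.
  - exact Ck2.
  - exact Ck3.
  - exact zeta_condZ0.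
  - exact zeta_condZ1.
  - exact zeta_condZ2.
  - exact (condZ3_of_concave z zeta_concave zeta_0).
  - now apply zeta_condZ4.
Qed.

End ZetaOfData.

Definition partial_integrals_bounded (g : R -> R) : Prop :=
  exists M, forall e, 0 < e < 1 -> RInt g e 1 <= M.

Lemma ex_RInt_gen_partial_bounds (D : R -> R) :
  (forall v, 0 < v <= 1 -> 0 <= D v) ->
  ex_RInt_gen D (at_right 0) (at_point 1) ->
  exists M, forall e, 0 < e < 1 -> ex_RInt D e 1 /\ RInt D e 1 <= M.
Proof.
  intros Hp [l Hl].
  destruct (Hl (ball l (mkposreal 1 Rlt_0_1)) (locally_ball l _)) as [P R [d Hd] HR Himp].
  assert (Hd0 : 0 < d) by apply cond_pos.
  assert (Ha : forall a, 0 < a < d -> exists y, is_RInt D a 1 y /\ y < l + 1).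
  { intros a Ha. destruct (Himp a 1) as [y [Hy1 Hy2]]; auto.
    - apply Hd; [|lra]. apply Rabs_def1; simpl; unfold minus, plus, opp; simpl; lra.
    - exists y. split; auto. apply Rabs_def2 in Hy2. simpl in Hy2.
      unfold minus, plus, opp in Hy2; simpl in Hy2. lra. }
  exists (l + 1). intros e He.
  set (a := Rmin e (d / 2)).
  assert (Ha0 : 0 < a) by (apply Rmin_pos; lra).
  assert (Hae : a <= e) by apply Rmin_l.
  assert (Had : a <= d / 2) by apply Rmin_r.
  destruct (Ha a ltac:(lra)) as [y [Hy1 Hy2]].
  assert (Ex : ex_RInt D a 1) by (exists y; exact Hy1).
  assert (Ex2 : ex_RInt D e 1) by (apply (ex_RInt_Chasles_2 D a e 1); [lra|exact Ex]).
  split; [exact Ex2|].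
  assert (Ex1 : ex_RInt D a e) by (apply (ex_RInt_Chasles_1 D a e 1); [lra|exact Ex]).
  pose proof (RInt_Chasles D a e 1 Ex1 Ex2) as HC.
  rewrite (is_RInt_unique D a 1 y Hy1) in HC.
  assert (0 <= RInt D a e) by (apply RInt_ge_0; auto; intros; apply Hp; lra).
  unfold plus in HC; simpl in HC. lra.
Qed.

Lemma partial_integrals_bounded_of_dominated (g D1 D2 : R -> R) (al be : R) :
  0 <= al -> 0 <= be ->
  (forall v, 0 < v -> continuous g v) ->
  (forall v, 0 < v <= 1 -> 0 <= D1 v) -> (forall v, 0 < v <= 1 -> 0 <= D2 v) ->
  ex_RInt_gen D1 (at_right 0) (at_point 1) -> ex_RInt_gen D2 (at_right 0) (at_point 1) ->
  (forall v, 0 < v <= 1 -> g v <= al * D1 v + be * D2 v) ->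
  partial_integrals_bounded g.
Proof.
  intros Hal Hbe Hc H1 H2 E1 E2 Hle.
  destruct (ex_RInt_gen_partial_bounds D1 H1 E1) as [M1 HM1].
  destruct (ex_RInt_gen_partial_bounds D2 H2 E2) as [M2 HM2].
  exists (al * M1 + be * M2). intros e He.
  destruct (HM1 e He) as [X1 B1]. destruct (HM2 e He) as [X2 B2].
  assert (Xg : ex_RInt g e 1).
  { apply (ex_RInt_continuous (V := R_CompleteNormedModule)). intros x Hx. apply Hc.
    assert (0 < Rmin e 1) by (apply Rmin_pos; lra). lra. }
  assert (X1' : ex_RInt (fun v => al * D1 v) e 1)
    by now apply (ex_RInt_scal (V := R_CompleteNormedModule)).
  assert (X2' : ex_RInt (fun v => be * D2 v) e 1)
    by now apply (ex_RInt_scal (V := R_CompleteNormedModule)).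
  apply Rle_trans with (RInt (fun v => al * D1 v + be * D2 v) e 1).
  - apply RInt_le; [lra|auto|now apply (ex_RInt_plus (fun v => al * D1 v))|].
    intros x Hx. apply Hle. lra.
  - rewrite (RInt_plus (fun v => al * D1 v) (fun v => be * D2 v)) by auto.
    rewrite (RInt_scal D1), (RInt_scal D2) by auto.
    unfold plus, scal; simpl; unfold mult; simpl.
    apply Rplus_le_compat; apply Rmult_le_compat_l; auto.
Qed.

(* [int0 g] is the improper integral of [g] over (0,1], taken as a supremum
   since [g] is nonnegative; [prim0 g x] is then its primitive vanishing at 0. *)
Definition int0 (g : R -> R) : R :=
  real (Lub_Rbar (fun r : R => exists e, 0 < e < 1 /\ r = RInt g e 1)).

Definition prim0 (g : R -> R) (x : R) : R := int0 g + RInt g 1 x.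

Section PrimitiveAt0.

Variable g : R -> R.
Hypothesis g_cont : forall v, 0 < v -> continuous g v.
Hypothesis g_nonneg : forall v, 0 < v -> 0 <= g v.
Hypothesis g_bounded : partial_integrals_bounded g.

Lemma ex_RInt_pos (a b : R) : 0 < a -> 0 < b -> ex_RInt g a b.
Proof.
  intros Ha Hb. apply (ex_RInt_continuous (V := R_CompleteNormedModule)). intros x Hx.
  apply g_cont. assert (0 < Rmin a b) by (apply Rmin_pos; lra). lra.
Qed.

Lemma RInt_pos_nonneg (a b : R) : 0 < a <= b -> 0 <= RInt g a b.
Proof.
  intros Hab. apply RInt_ge_0; [lra|apply ex_RInt_pos; lra|]. intros; apply g_nonneg; lra.
Qed.

Lemma int0_sup :
  (forall e, 0 < e < 1 -> RInt g e 1 <= int0 g) /\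
  (forall d, 0 < d -> exists e, 0 < e < 1 /\ int0 g - d < RInt g e 1).
Proof.
  destruct g_bounded as [M HM].
  set (E := fun r : R => exists e, 0 < e < 1 /\ r = RInt g e 1).
  destruct (Lub_Rbar_correct E) as [Hub Hlub].
  assert (Hfin : Lub_Rbar E = Finite (int0 g)).
  { unfold int0. fold E. destruct (Lub_Rbar E) eqn:HE; simpl; auto.
    - exfalso. apply (Hlub (Finite M)). intros x [e [He ->]]. simpl. now apply HM.
    - exfalso. specialize (Hub (RInt g (1/2) 1) ltac:(exists (1/2); split; [lra|reflexivity])).
      exact Hub. }
  rewrite Hfin in Hub, Hlub. split.
  - intros e He. exact (Hub (RInt g e 1) ltac:(exists e; split; auto)).
  - intros d Hd. apply NNPP. intros Hno.
    enough (Hle : int0 g <= int0 g - d) by lra.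
    apply (Hlub (Finite (int0 g - d))). intros x [e [He ->]]. simpl.
    apply Rnot_lt_le. intros Hlt. apply Hno. now exists e.
Qed.

Lemma prim0_as_RInt (x a : R) : 0 < x <= a -> a < 1 ->
  prim0 g x = int0 g - RInt g a 1 - RInt g x a.
Proof.
  intros Hx Ha. unfold prim0.
  rewrite <- (opp_RInt_swap g x 1) by (apply ex_RInt_pos; lra).
  rewrite <- (RInt_Chasles g x a 1) by (apply ex_RInt_pos; lra).
  unfold opp, plus; simpl. ring.
Qed.

Lemma prim0_nonneg (x : R) : 0 < x -> 0 <= prim0 g x.
Proof.
  intros Hx. destruct int0_sup as [Hle _].
  destruct (Rlt_or_le x 1) as [H1|H1].
  - rewrite (prim0_as_RInt x x) by lra. rewrite RInt_point. specialize (Hle x ltac:(lra)).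
    unfold zero; simpl. lra.
  - specialize (Hle (1/2) ltac:(lra)). unfold prim0.
    pose proof (RInt_pos_nonneg (1/2) 1 ltac:(lra)).
    pose proof (RInt_pos_nonneg 1 x ltac:(lra)). lra.
Qed.

Lemma prim0_small (e : R) : 0 < e -> exists d, 0 < d /\ forall x, 0 < x < d -> prim0 g x < e.
Proof.
  intros He. destruct int0_sup as [_ Happ].
  destruct (Happ e He) as [a [Ha Hlt]]. exists a. split; [lra|]. intros x Hx.
  rewrite (prim0_as_RInt x a) by lra.
  pose proof (RInt_pos_nonneg x a ltac:(lra)). lra.
Qed.

Lemma is_derive_prim0 (x : R) : 0 < x -> is_derive (prim0 g) x (g x).
Proof.
  intros Hx. unfold prim0.
  replace (g x) with (0 + g x) by ring.
  apply (is_derive_plus (fun _ => int0 g) (fun y => RInt g 1 y)); [auto_derive; auto|].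
  apply (is_derive_RInt g (fun y => RInt g 1 y) 1 x); [|now apply g_cont].
  generalize (locally_pos x Hx). apply filter_imp. intros u Hu.
  apply (RInt_correct (V := R_CompleteNormedModule)). apply ex_RInt_pos; lra.
Qed.

Lemma prim0_le_log (x : R) : (forall v, 0 < v -> g v <= / v) -> 0 < x ->
  prim0 g x <= int0 g + ln (1 + x).
Proof.
  intros Hb Hx. pose proof (int0_sup) as [Hle _].
  assert (0 <= ln (1 + x)) by (rewrite <- ln_1; apply ln_le; lra).
  destruct (Rlt_or_le x 1) as [H1|H1].
  - rewrite (prim0_as_RInt x x) by lra. rewrite RInt_point.
    pose proof (RInt_pos_nonneg x 1 ltac:(lra)). unfold zero; simpl. lra.
  - assert (Hlog : is_RInt (fun v => / v) 1 x (ln x)).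
    { replace (ln x) with (minus (ln x) (ln 1)) by (rewrite ln_1; unfold minus, plus, opp; simpl; ring).
      apply (is_RInt_derive ln (fun v => / v)).
      - intros v Hv. assert (0 < Rmin 1 x) by (apply Rmin_pos; lra). apply is_derive_ln. lra.
      - intros v Hv. assert (0 < Rmin 1 x) by (apply Rmin_pos; lra).
        apply (ex_derive_continuous (V := R_NormedModule)). auto_derive. lra. }
    assert (RInt g 1 x <= ln x).
    { rewrite <- (is_RInt_unique _ _ _ _ Hlog).
      apply RInt_le; [lra|apply ex_RInt_pos; lra|now exists (ln x)|].
      intros v Hv. apply Hb. lra. }
    assert (ln x <= ln (1 + x)) by (apply ln_le; lra).
    unfold prim0. lra.
Qed.

End PrimitiveAt0.

Definition gauge (s x : R) : R := (Rpower x (2 * s) - x) / (1 - 2 * s).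

Lemma rpow_split (x b : R) : 0 < x -> Rpower x b = x * exp ((b - 1) * ln x).
Proof.
  intros Hx. unfold Rpower. replace (b * ln x) with (ln x + (b - 1) * ln x) by ring.
  rewrite exp_plus, exp_ln by lra. reflexivity.
Qed.

Lemma ln_inv_nonneg (x : R) : 0 < x <= 1 -> 0 <= ln (1 / x) /\ ln (1 / x) = - ln x.
Proof.
  intros Hx. unfold Rdiv. rewrite Rmult_1_l, ln_Rinv by lra.
  split; [|reflexivity]. assert (ln x <= ln 1) by (apply ln_le; lra). rewrite ln_1 in H. lra.
Qed.

Lemma gauge_gt_half (s x : R) : 0 < x <= 1 -> 1/2 < s ->
  gauge s x <= x * ln (1 / x) /\ gauge s x <= x / (2 * s - 1).
Proof.
  intros Hx Hs. unfold gauge. destruct (ln_inv_nonneg x Hx) as [Hl El]. rewrite El in *.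
  rewrite rpow_split by lra. set (c := 2 * s - 1).
  pose proof (exp_ineq1_le (c * ln x)). pose proof (exp_pos (c * ln x)).
  replace ((x * exp (c * ln x) - x) / (1 - 2 * s))
    with (x * (1 - exp (c * ln x)) / c) by (unfold c; field; lra).
  assert (Hc : 0 < c) by (unfold c; lra).
  split.
  - apply Rmult_le_reg_r with c; [lra|].
    replace (x * (1 - exp (c * ln x)) / c * c) with (x * (1 - exp (c * ln x))) by (field; lra).
    replace (x * - ln x * c) with (x * - (c * ln x)) by ring.
    apply Rmult_le_compat_l; lra.
  - unfold Rdiv. apply Rmult_le_compat_r; [left; apply Rinv_0_lt_compat; lra|].
    assert (0 <= x * exp (c * ln x)) by (apply Rmult_le_pos; lra). nra.
Qed.

Lemma xlog_le_rpow (x a : R) : 0 < x <= 1 -> 0 < a < 1 -> x * ln (1 / x) <= / (1 - a) * Rpower x a.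
Proof.
  intros Hx Ha. destruct (ln_inv_nonneg x Hx) as [Hl El]. rewrite El in *.
  rewrite rpow_split by lra.
  set (Lp := - ln x) in *. replace ((a - 1) * ln x) with ((1 - a) * Lp) by (unfold Lp; ring).
  pose proof (exp_ineq1_le ((1 - a) * Lp)).
  assert (Lp <= / (1 - a) * exp ((1 - a) * Lp)).
  { apply Rmult_le_reg_l with (1 - a); [lra|].
    rewrite <- Rmult_assoc, Rinv_r by lra. nra. }
  replace (/ (1 - a) * (x * exp ((1 - a) * Lp))) with (x * (/ (1 - a) * exp ((1 - a) * Lp))) by ring.
  apply Rmult_le_compat_l; lra.
Qed.

Lemma expm1_div_le (c l : R) : 0 < c -> (exp (c * l) - 1) / c <= l * exp (c * l).
Proof.
  intros Hc. pose proof (exp_ineq1_le (- (c * l))). pose proof (exp_pos (c * l)).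
  assert (E : exp (c * l) * exp (- (c * l)) = 1)
    by (rewrite <- exp_plus; replace (c * l + - (c * l)) with 0 by ring; apply exp_0).
  apply Rmult_le_reg_r with c; [lra|].
  replace ((exp (c * l) - 1) / c * c) with (exp (c * l) - 1) by (field; lra). nra.
Qed.

Lemma le_exp_scaled (c l : R) : 0 < c -> l <= 2 / c * exp (c / 2 * l).
Proof.
  intros Hc. pose proof (exp_ineq1_le (c / 2 * l)).
  apply Rmult_le_reg_l with (c / 2); [lra|].
  replace (c / 2 * (2 / c * exp (c / 2 * l))) with (exp (c / 2 * l)) by (field; lra). nra.
Qed.

(* With [l = ln (1/x)], [c = 1 - 2 s] and [c0 = 1 - a], [gauge s x = x (e^(c l) - 1) / c]
   is compared with [x e^(c0 l)]: via [1/c <= 2/c0] when [c >= c0/2], and via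
   [(e^(c l) - 1)/c <= l e^(c l)] with [l <= (2/c0) e^(c0 l/2)] when [c < c0/2]. *)
Lemma gauge_lt_half (s x a : R) : 0 < x <= 1 -> 0 < a < 1 -> a <= 2 * s < 1 ->
  gauge s x <= 2 / (1 - a) * Rpower x a.
Proof.
  intros Hx Ha Hs. unfold gauge. destruct (ln_inv_nonneg x Hx) as [Hl El].
  rewrite !rpow_split by lra.
  set (l := - ln x) in *. set (c := 1 - 2 * s). set (c0 := 1 - a).
  assert (Hc : 0 < c) by (unfold c; lra). assert (Hcc : c <= c0) by (unfold c, c0; lra).
  replace ((2 * s - 1) * ln x) with (c * l) by (unfold c, l; ring).
  replace ((a - 1) * ln x) with (c0 * l) by (unfold c0, l; ring).
  replace ((x * exp (c * l) - x) / c) with (x * ((exp (c * l) - 1) / c)) by (field; lra).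
  replace (2 / c0 * (x * exp (c0 * l))) with (x * (2 / c0 * exp (c0 * l))) by (field; lra).
  apply Rmult_le_compat_l; [lra|].
  assert (Hc0 : 0 < c0) by lra.
  assert (Hexp_mono : forall p q, p <= q -> exp (p * l) <= exp (q * l)).
  { intros p q Hpq. destruct (Req_dec (p * l) (q * l)) as [->|]; [lra|].
    left. apply exp_increasing. nra. }
  pose proof (exp_pos (c * l)). pose proof (exp_pos (c0 / 2 * l)).
  destruct (Rle_or_lt (c0 / 2) c) as [Hbig|Hsmall].
  - assert (exp (c * l) <= exp (c0 * l)) by now apply Hexp_mono.
    assert (/ c <= 2 / c0).
    { apply Rmult_le_reg_l with (c * c0); [nra|].
      replace (c * c0 * / c) with c0 by (field; lra).
      replace (c * c0 * (2 / c0)) with (2 * c) by (field; lra). lra. }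
    assert (0 <= / c) by (left; apply Rinv_0_lt_compat; lra).
    unfold Rdiv. nra.
  - pose proof (expm1_div_le c l Hc). pose proof (le_exp_scaled c0 l Hc0).
    assert (exp (c * l) <= exp (c0 / 2 * l)) by (apply Hexp_mono; lra).
    replace (exp (c0 * l)) with (exp (c0 / 2 * l) * exp (c0 / 2 * l))
      by (rewrite <- exp_plus; f_equal; field).
    apply Rle_trans with (l * exp (c0 / 2 * l)); [nra|].
    replace (2 / c0 * (exp (c0 / 2 * l) * exp (c0 / 2 * l)))
      with ((2 / c0 * exp (c0 / 2 * l)) * exp (c0 / 2 * l)) by ring.
    apply Rmult_le_compat_r; lra.
Qed.

Record profile (L L1 L2 : R -> R) (cL : R) : Prop := {
  profile_cL_pos : 0 < cL;
  profile_derive : forall x, 0 < x -> is_derive L x (L1 x);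
  profile_derive1 : forall x, 0 < x -> is_derive L1 x (L2 x);
  profile_derive2_cont : forall x, 0 < x -> continuous L2 x;
  profile_bounds : forall x, 0 < x -> 0 <= L x <= 1;
  profile_derive_nonneg : forall x, 0 < x -> 0 <= L1 x;
  profile_x_derive_le : forall x, 0 < x -> x * L1 x <= L x;
  profile_derive2_lower : forall x, 0 < x -> - cL * L x <= x ^ 2 * L2 x }.

Record dominates_gauges (s0 : R) (L : R -> R) (cg : R) : Prop := {
  dominates_cg_pos : 0 < cg;
  dominates_id : forall x, 0 < x <= 1 -> x <= cg * L x;
  dominates_gauge : forall x s, 0 < x <= 1 -> s0 <= s < 1 -> s <> 1/2 -> gauge s x <= cg * L x;
  dominates_xlog : forall x, 0 < x <= 1 -> s0 <= 1/2 -> x * ln (1 / x) <= cg * L x }.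

Section ProfileFacts.

Variables (L L1 L2 : R -> R) (cL : R).
Hypothesis HL : profile L L1 L2 cL.

Lemma profile_continuous (x : R) : 0 < x -> continuous L x.
Proof.
  intros Hx. apply (ex_derive_continuous (V := R_NormedModule)).
  exists (L1 x). now apply HL.
Qed.

Lemma profile_nondecr (x y : R) : 0 < x -> x <= y -> L x <= L y.
Proof.
  intros Hx Hxy. apply (le_of_derive_nonneg L L1); auto.
  - intros c Hc. apply HL; lra.
  - intros c Hc. apply HL; lra.
  - intros c Hc. apply continuity_pt_filterlim, profile_continuous. lra.
Qed.

Lemma profile_ratio_nonincr (x y : R) : 0 < x -> x <= y -> L y / y <= L x / x.
Proof.
  intros Hx Hxy.
  assert (Hder : forall c, 0 < c ->
    is_derive (fun t => - (L t / t)) c ((L c - c * L1 c) / c ^ 2)).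
  { intros c Hc. pose proof (profile_derive _ _ _ _ HL c Hc) as HLc. auto_derive.
    - split; [now exists (L1 c)|lra].
    - rewrite (Derive_eta_unique L c (L1 c) HLc). field. lra. }
  enough (- (L x / x) <= - (L y / y)) by lra.
  apply (le_of_derive_nonneg (fun t => - (L t / t)) (fun t => (L t - t * L1 t) / t ^ 2)); auto.
  - intros c Hc. apply Hder. lra.
  - intros c Hc. apply Rdiv_le_0_compat; [|apply pow_lt; lra].
    pose proof (profile_x_derive_le _ _ _ _ HL c ltac:(lra)). lra.
  - intros c Hc. apply continuity_pt_filterlim,
      (ex_derive_continuous (V := R_NormedModule) (fun t => - (L t / t))).
    exists ((L c - c * L1 c) / c ^ 2). apply Hder. lra.
Qed.

End ProfileFacts.

Lemma ln1p_ge (x : R) : 0 < x -> ln x <= ln (1 + x) /\ 0 <= ln (1 + x).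
Proof. intros. split; [apply ln_le; lra|]. rewrite <- ln_1. apply ln_le; lra. Qed.

Definition profile_lin (x : R) : R := x / (1 + x).
Definition profile_lin' (x : R) : R := / (1 + x) ^ 2.
Definition profile_lin'' (x : R) : R := - 2 / (1 + x) ^ 3.

Lemma profile_lin_profile : profile profile_lin profile_lin' profile_lin'' 2.
Proof.
  unfold profile_lin, profile_lin', profile_lin''. split; [lra| | | | | | |].
  - intros x Hx. auto_derive; [lra|]. field. lra.
  - intros x Hx. auto_derive; [nra|]. field. lra.
  - intros x Hx. apply (ex_derive_continuous (V := R_NormedModule)). auto_derive. nra.
  - intros x Hx. split; [apply Rdiv_le_0_compat; lra|].
    apply Rmult_le_reg_r with (1 + x); [lra|]. field_simplify; lra.
  - intros x Hx. left. apply Rinv_0_lt_compat, pow_lt. lra.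
  - intros x Hx. apply Rmult_le_reg_r with ((1 + x) ^ 2); [apply pow_lt; lra|].
    field_simplify; try lra. nra.
  - intros x Hx. apply Rmult_le_reg_r with ((1 + x) ^ 3); [apply pow_lt; lra|].
    field_simplify; try lra. nra.
Qed.

Lemma profile_lin_dominates (s0 : R) : 1/2 < s0 ->
  dominates_gauges s0 profile_lin (2 + 2 / (2 * s0 - 1)).
Proof.
  intros Hs0. assert (Hp : 0 < 2 / (2 * s0 - 1)) by (apply Rdiv_lt_0_compat; lra).
  assert (Hhalf : forall x, 0 < x <= 1 -> x <= 2 * profile_lin x).
  { intros x Hx. unfold profile_lin. apply Rmult_le_reg_r with (1 + x); [lra|].
    replace (2 * (x / (1 + x)) * (1 + x)) with (2 * x) by (field; lra). nra. }
  split; [lra| | |intros; lra].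
  - intros x Hx. pose proof (Hhalf x Hx).
    assert (0 <= profile_lin x) by (unfold profile_lin; apply Rdiv_le_0_compat; lra). nra.
  - intros x s Hx Hs Hs2. pose proof (Hhalf x Hx).
    assert (0 <= profile_lin x) by (unfold profile_lin; apply Rdiv_le_0_compat; lra).
    destruct (gauge_gt_half s x Hx ltac:(lra)) as [_ H2].
    assert (x / (2 * s - 1) <= x / (2 * s0 - 1)).
    { unfold Rdiv. apply Rmult_le_compat_l; [lra|]. apply Rinv_le_contravar; lra. }
    assert (x / (2 * s0 - 1) <= 2 / (2 * s0 - 1) * profile_lin x).
    { unfold Rdiv. replace (2 * / (2 * s0 - 1) * profile_lin x)
        with ((2 * profile_lin x) * / (2 * s0 - 1)) by ring.
      apply Rmult_le_compat_r; [left; apply Rinv_0_lt_compat; lra|lra]. }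
    nra.
Qed.

Definition profile_log (x : R) : R := x / (1 + x) * (1 + ln (1 + x) - ln x).
Definition profile_log' (x : R) : R := (ln (1 + x) - ln x) / (1 + x) ^ 2.
Definition profile_log'' (x : R) : R :=
  - / (x * (1 + x) ^ 3) - 2 * (ln (1 + x) - ln x) / (1 + x) ^ 3.

Lemma ln_1p_sub_ln (x : R) : 0 < x -> 0 <= ln (1 + x) - ln x <= / x.
Proof.
  intros Hx. destruct (ln1p_ge x Hx) as [H1 _].
  assert (E : ln (1 + x) - ln x = ln (1 + / x)).
  { rewrite <- ln_div by lra. f_equal. field. lra. }
  pose proof (Rinv_0_lt_compat x Hx).
  pose proof (exp_ineq1_le (ln (1 + / x))). rewrite exp_ln in H0 by lra. lra.
Qed.

Lemma profile_log_profile : profile profile_log profile_log' profile_log'' 3.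
Proof.
  unfold profile_log, profile_log', profile_log''. split; [lra| | | | | | |].
  - intros x Hx. auto_derive; [lra|]. field. lra.
  - intros x Hx. auto_derive; [repeat split; nra|]. field. lra.
  - intros x Hx. apply (ex_derive_continuous (V := R_NormedModule)). auto_derive.
    repeat split; nra.
  - intros x Hx. destruct (ln_1p_sub_ln x Hx) as [Hl Hl'].
    split; [apply Rmult_le_pos; [apply Rdiv_le_0_compat|]; lra|].
    apply Rmult_le_reg_r with (1 + x); [lra|].
    replace (x / (1 + x) * (1 + ln (1 + x) - ln x) * (1 + x))
      with (x + x * (ln (1 + x) - ln x)) by (field; lra).
    assert (x * (ln (1 + x) - ln x) <= x * / x) by (apply Rmult_le_compat_l; lra).
    rewrite Rinv_r in H by lra. lra.
  - intros x Hx. destruct (ln_1p_sub_ln x Hx).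
    apply Rdiv_le_0_compat; [lra|apply pow_lt; lra].
  - intros x Hx. destruct (ln_1p_sub_ln x Hx) as [Hl _].
    replace (x * ((ln (1 + x) - ln x) / (1 + x) ^ 2))
      with (x / (1 + x) * ((ln (1 + x) - ln x) / (1 + x))) by (field; lra).
    apply Rmult_le_compat_l; [apply Rdiv_le_0_compat; lra|].
    apply Rmult_le_reg_r with (1 + x); [lra|].
    replace ((ln (1 + x) - ln x) / (1 + x) * (1 + x)) with (ln (1 + x) - ln x) by (field; lra).
    nra.
  - intros x Hx. destruct (ln_1p_sub_ln x Hx) as [Hl _]. set (l := ln (1 + x) - ln x) in *.
    replace (1 + ln (1 + x) - ln x) with (1 + l) by (unfold l; ring).
    set (y := x / (1 + x)).
    assert (Hy : 0 <= y) by (apply Rdiv_le_0_compat; lra).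
    (* [x^2 L''(x) = - y/(1+x)^2 - 2 y l x/(1+x)^2] and both factors [.../(1+x)^2] are [<= 1]. *)
    replace (x ^ 2 * (- / (x * (1 + x) ^ 3) - 2 * l / (1 + x) ^ 3))
      with (- y * / (1 + x) ^ 2 - 2 * (y * l) * (x / (1 + x) ^ 2)) by (unfold y; field; lra).
    assert (Hi1 : / (1 + x) ^ 2 <= 1).
    { rewrite <- Rinv_1. apply Rinv_le_contravar; [lra|]. nra. }
    assert (Hi2 : x / (1 + x) ^ 2 <= 1).
    { apply Rmult_le_reg_r with ((1 + x) ^ 2); [apply pow_lt; lra|]. field_simplify; [nra|lra]. }
    assert (0 <= / (1 + x) ^ 2) by (left; apply Rinv_0_lt_compat, pow_lt; lra).
    assert (0 <= y * l) by nra.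
    nra.
Qed.

Lemma profile_log_dominates : dominates_gauges (1/2) profile_log 2.
Proof.
  assert (Hxlog : forall x, 0 < x <= 1 -> x * ln (1 / x) <= 2 * profile_log x /\ x <= 2 * profile_log x).
  { intros x Hx. destruct (ln1p_ge x ltac:(lra)) as [H1 H2].
    destruct (ln_inv_nonneg x Hx) as [Hl El]. rewrite El.
    assert (x / 2 <= x / (1 + x))
      by (unfold Rdiv; apply Rmult_le_compat_l; [lra|apply Rinv_le_contravar; lra]).
    assert (x / 2 * (1 - ln x) <= profile_log x)
      by (unfold profile_log; apply Rmult_le_compat; lra).
    nra. }
  split; [lra| | |].
  - intros x Hx. apply Hxlog, Hx.
  - intros x s Hx Hs Hs2. destruct (gauge_gt_half s x Hx ltac:(lra)) as [G _].
    pose proof (Hxlog x Hx). lra.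
  - intros x Hx _. apply Hxlog, Hx.
Qed.

Definition profile_pow (a x : R) : R := exp (a * (ln x - ln (1 + x))).
Definition profile_pow' (a x : R) : R := a * profile_pow a x / (x * (1 + x)).
Definition profile_pow'' (a x : R) : R :=
  a * profile_pow a x * (a - 1 - 2 * x) / (x * (1 + x)) ^ 2.

Lemma profile_pow_profile (a : R) : 0 < a < 1 ->
  profile (profile_pow a) (profile_pow' a) (profile_pow'' a) 2.
Proof.
  intros Ha. unfold profile_pow', profile_pow''.
  assert (Hpos : forall x, 0 < profile_pow a x) by (intros; apply exp_pos).
  split; [lra| | | | | | |].
  - intros x Hx. unfold profile_pow. auto_derive; [repeat split; lra|].
    unfold Rminus. field. lra.
  - intros x Hx. unfold profile_pow. auto_derive; [repeat split; nra|]. unfold Rminus. field. lra.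
  - intros x Hx. apply (ex_derive_continuous (V := R_NormedModule)).
    unfold profile_pow. auto_derive. repeat split; nra.
  - intros x Hx. split; [now apply Rlt_le|]. unfold profile_pow.
    apply Rle_trans with (exp 0); [|rewrite exp_0; lra].
    destruct (ln1p_ge x Hx).
    destruct (Req_dec (a * (ln x - ln (1 + x))) 0) as [->|]; [lra|].
    left. apply exp_increasing. nra.
  - intros x Hx. specialize (Hpos x). apply Rdiv_le_0_compat; nra.
  - intros x Hx. specialize (Hpos x).
    replace (x * (a * profile_pow a x / (x * (1 + x)))) with (a * profile_pow a x / (1 + x))
      by (field; lra).
    apply Rmult_le_reg_r with (1 + x); [lra|].
    replace (a * profile_pow a x / (1 + x) * (1 + x)) with (a * profile_pow a x) by (field; lra).
    nra.
  - intros x Hx. specialize (Hpos x).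
    replace (x ^ 2 * (a * profile_pow a x * (a - 1 - 2 * x) / (x * (1 + x)) ^ 2))
      with (profile_pow a x * (a * (a - 1 - 2 * x) / (1 + x) ^ 2)) by (field; lra).
    assert (- 2 <= a * (a - 1 - 2 * x) / (1 + x) ^ 2).
    { apply Rmult_le_reg_r with ((1 + x) ^ 2); [apply pow_lt; lra|].
      replace (a * (a - 1 - 2 * x) / (1 + x) ^ 2 * (1 + x) ^ 2)
        with (a * (a - 1 - 2 * x)) by (field; lra).
      nra. }
    nra.
Qed.

Lemma profile_pow_lower (a x : R) : 0 < a < 1 -> 0 < x <= 1 ->
  x <= 2 * profile_pow a x /\ Rpower x a <= 2 * profile_pow a x.
Proof.
  intros Ha Hx. destruct (ln1p_ge x ltac:(lra)) as [H1 H2].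
  assert (Hl2 : ln (1 + x) <= ln 2) by (apply ln_le; lra).
  assert (Hlx : ln x <= 0) by (rewrite <- ln_1; apply ln_le; lra).
  assert (E2 : exp (- ln 2) = / 2) by (rewrite exp_Ropp, exp_ln; lra).
  assert (Hexp : forall p q, p <= q -> exp p <= exp q).
  { intros p q Hpq. destruct (Req_dec p q) as [->|]; [lra|]. left; apply exp_increasing; lra. }
  unfold profile_pow. split.
  - pose proof (Hexp (ln x + - ln 2) (a * (ln x - ln (1 + x))) ltac:(nra)).
    rewrite exp_plus, exp_ln, E2 in H by lra. lra.
  - unfold Rpower.
    pose proof (Hexp (a * ln x + - ln 2) (a * (ln x - ln (1 + x))) ltac:(nra)).
    rewrite exp_plus, E2 in H. lra.
Qed.

Lemma profile_pow_dominates (s0 : R) : 0 < s0 < 1/2 ->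
  dominates_gauges s0 (profile_pow (2 * s0)) (2 + 4 / (1 - 2 * s0)).
Proof.
  intros Hs0. set (a := 2 * s0). assert (Ha : 0 < a < 1) by (unfold a; lra).
  assert (Hk : 0 < / (1 - a)) by (apply Rinv_0_lt_compat; lra).
  assert (HL : forall x, 0 <= profile_pow a x) by (intros; left; apply exp_pos).
  assert (Hpow : forall x, 0 < x <= 1 -> / (1 - a) * Rpower x a <= 2 / (1 - a) * profile_pow a x).
  { intros x Hx. destruct (profile_pow_lower a x Ha Hx) as [_ H2]. specialize (HL x).
    unfold Rdiv. nra. }
  split; [|intros x Hx|intros x s Hx Hs Hs2|intros x Hx _].
  - assert (0 < 4 / (1 - a)) by (unfold Rdiv; lra). lra.
  - destruct (profile_pow_lower a x Ha Hx) as [H1 _]. specialize (HL x).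
    assert (0 <= 4 / (1 - a) * profile_pow a x) by (unfold Rdiv; nra). nra.
  - specialize (Hpow x Hx). specialize (HL x).
    assert (0 <= 4 / (1 - a) * profile_pow a x) by (unfold Rdiv; nra).
    destruct (Rlt_or_le s (1/2)) as [Hlt|Hge].
    + pose proof (gauge_lt_half s x a Hx Ha ltac:(unfold a; lra)).
      assert (2 / (1 - a) * Rpower x a <= 2 * (/ (1 - a) * Rpower x a)) by (unfold Rdiv; lra).
      nra.
    + destruct (gauge_gt_half s x Hx ltac:(lra)) as [G _].
      pose proof (xlog_le_rpow x a Hx Ha). nra.
  - specialize (Hpow x Hx). specialize (HL x). pose proof (xlog_le_rpow x a Hx Ha).
    assert (0 <= 4 / (1 - a) * profile_pow a x) by (unfold Rdiv; nra). nra.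
Qed.

Lemma profile_chain_lower (L L1 L2 : R -> R) (cL A P h D : R) :
  profile L L1 L2 cL -> 0 <= A -> 0 < P -> 0 <= h <= P / 2 -> - 5 * P <= D ->
  - (cL / 4 + 5 / 4) * (A * L P) <= A * (L2 P * h ^ 2 + L1 P * (D / 4)).
Proof.
  intros HL HA HP Hh HD.
  pose proof (profile_bounds _ _ _ _ HL P HP). pose proof (profile_cL_pos _ _ _ _ HL).
  assert (T1 : - cL * L P / 4 <= L2 P * h ^ 2).
  { destruct (Rle_or_lt 0 (L2 P)) as [Hp|Hn].
    - assert (0 <= L2 P * h ^ 2) by (apply Rmult_le_pos; [lra|apply pow2_ge_0]). nra.
    - pose proof (profile_derive2_lower _ _ _ _ HL P HP).
      assert (h ^ 2 <= P ^ 2 / 4) by (simpl; nra).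
      assert (L2 P * (P ^ 2 / 4) <= L2 P * h ^ 2) by (apply Rmult_le_compat_neg_l; lra).
      nra. }
  assert (T2 : - (5 / 4) * L P <= L1 P * (D / 4)).
  { pose proof (profile_derive_nonneg _ _ _ _ HL P HP).
    pose proof (profile_x_derive_le _ _ _ _ HL P HP).
    assert (L1 P * (- 5 * P) <= L1 P * D) by (apply Rmult_le_compat_l; lra). lra. }
  replace (- (cL / 4 + 5 / 4) * (A * L P)) with (A * (- cL * L P / 4 + - (5 / 4) * L P)) by field.
  apply Rmult_le_compat_l; lra.
Qed.

Lemma ln_1p_sqrt_le (t : R) : 0 < t -> ln (1 + sqrt t) <= 1 + ln (1 + t).
Proof.
  intros Ht. pose proof (sqrt_lt_R0 t Ht). pose proof (sqrt_sqrt t ltac:(lra)).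
  assert (ln (1 + sqrt t) <= ln (2 * (1 + t))) by (apply ln_le; nra).
  rewrite ln_mult in H1 by lra.
  assert (ln 2 <= 1).
  { rewrite <- ln_exp with 1. apply ln_le; [lra|]. pose proof (exp_ineq1_le 1). lra. }
  lra.
Qed.

Lemma continuous_sqrt_comp (f : R -> R) (t : R) :
  0 < t -> continuous f (sqrt t) -> continuous (fun y => f (sqrt y)) t.
Proof.
  intros Ht Hf. apply (continuous_comp sqrt f); auto.
  apply (ex_derive_continuous (V := R_NormedModule)). auto_derive. lra.
Qed.

Lemma continuous_Rinv_comp (f : R -> R) (t : R) :
  continuous f t -> f t <> 0 -> continuous (fun y => / f y) t.
Proof.
  intros Hf Hf0. apply (continuous_comp f Rinv); auto.
  apply (ex_derive_continuous (V := R_NormedModule)). auto_derive. exact Hf0.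
Qed.

Definition integrand (L w : R -> R) (v : R) : R := L (w v) / v.

(* The data whose [zeta_of] is [2 A int_0^(sqrt t) L(w v) dv / v + ln (1 + t)]. *)
Definition zw_of (A : R) (L w : R -> R) (t : R) : R :=
  if Rle_dec t 0 then 0 else 2 * A * prim0 (integrand L w) (sqrt t).
Definition Q_of (A : R) (L w : R -> R) (t : R) : R := A * L (w (sqrt t)).
Definition Q1_of (A : R) (L1 w : R -> R) (t : R) : R :=
  A * L1 (w (sqrt t)) * (Derive w (sqrt t) / (2 * sqrt t)).
Definition Q2_of (A : R) (L1 L2 w : R -> R) (t : R) : R :=
  A * (L2 (w (sqrt t)) * (Derive w (sqrt t) / (2 * sqrt t)) ^ 2
       + L1 (w (sqrt t)) * (Derive_n w 2 (sqrt t) / (4 * t)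
                            - Derive w (sqrt t) / (4 * t * sqrt t))).

Section Construction.

Variables (w L L1 L2 : R -> R) (cL A : R).
Hypothesis Hw : modulus w.
Hypothesis Hw_pos : forall x, 0 < x -> 0 < w x.
Hypothesis Hw_second : exists t0, 0 < t0 /\
  forall t, 0 < t < t0 -> t ^ 2 * Derive_n w 2 t >= - w t - 3 * t * Derive w t.
Hypothesis HL : profile L L1 L2 cL.
Hypothesis HA : 0 <= A.
Hypothesis Hint : partial_integrals_bounded (integrand L w).

Let g := integrand L w.

Lemma integrand_continuous (v : R) : 0 < v -> continuous g v.
Proof.
  intros Hv. unfold g, integrand.
  apply (continuous_ext (fun y => L (w y) * / y)); [reflexivity|].
  apply (continuous_mult (fun y => L (w y)) (fun y => / y)).
  - apply (continuous_comp w L); [now apply modulus_continuous|].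
    apply (profile_continuous L L1 L2 cL HL). auto.
  - apply (ex_derive_continuous (V := R_NormedModule)). auto_derive. lra.
Qed.

Lemma integrand_nonneg (v : R) : 0 < v -> 0 <= g v.
Proof.
  intros Hv. unfold g, integrand. apply Rdiv_le_0_compat; [apply HL; auto|lra].
Qed.

Lemma integrand_le_inv (v : R) : 0 < v -> g v <= / v.
Proof.
  intros Hv. unfold g, integrand, Rdiv. rewrite <- (Rmult_1_l (/ v)) at 2.
  apply Rmult_le_compat_r; [left; apply Rinv_0_lt_compat; lra|apply HL; auto].
Qed.

Lemma zw_of_pos (t : R) : 0 < t -> zw_of A L w t = 2 * A * prim0 g (sqrt t).
Proof. intros Ht. unfold zw_of. destruct (Rle_dec t 0); [lra|reflexivity]. Qed.

Lemma zw_of_nonpos (t : R) : t <= 0 -> zw_of A L w t = 0.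
Proof. intros Ht. unfold zw_of. destruct (Rle_dec t 0); [reflexivity|lra]. Qed.

Lemma zw_of_cont0 : continuity_pt (zw_of A L w) 0.
Proof.
  intros e He.
  destruct (prim0_small g integrand_continuous integrand_nonneg Hint (e / (2 * A + 1)))
    as [d [Hd Hdd]]; [apply Rdiv_lt_0_compat; lra|].
  exists (d * d). split; [nra|]. intros t [_ Ht]. simpl in *. unfold R_dist in *.
  rewrite (zw_of_nonpos 0), Rminus_0_r by lra. rewrite Rminus_0_r in Ht.
  destruct (Rle_lt_dec t 0) as [Hneg|Hpos]; [rewrite zw_of_nonpos, Rabs_R0; lra|].
  rewrite zw_of_pos, Rabs_right in * by lra.
  pose proof (sqrt_lt_R0 t Hpos). pose proof (sqrt_sqrt t ltac:(lra)).
  specialize (Hdd (sqrt t) ltac:(nra)).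
  pose proof (prim0_nonneg g integrand_continuous integrand_nonneg Hint (sqrt t) H).
  rewrite Rabs_right by (apply Rle_ge, Rmult_le_pos; lra).
  assert ((2 * A + 1) * prim0 g (sqrt t) < e).
  { replace e with ((2 * A + 1) * (e / (2 * A + 1))) by (field; lra).
    apply Rmult_lt_compat_l; lra. }
  nra.
Qed.

Lemma zw_of_derive (t : R) : 0 < t -> is_derive (zw_of A L w) t (Q_of A L w t / t).
Proof.
  intros Ht. pose proof (sqrt_lt_R0 t Ht) as Hr. pose proof (sqrt_sqrt t ltac:(lra)) as Hrr.
  apply (is_derive_ext_loc (fun t => 2 * A * prim0 g (sqrt t))).
  { generalize (locally_pos t Ht). apply filter_imp. intros u Hu. now rewrite zw_of_pos. }
  pose proof (is_derive_prim0 g integrand_continuous (sqrt t) Hr) as Hp.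
  auto_derive; [split; [now exists (g (sqrt t))|lra]|].
  rewrite (Derive_eta_unique (prim0 g) _ _ Hp).
  unfold g, integrand, Q_of. set (r := sqrt t) in *. clearbody r. subst t. field. lra.
Qed.

Lemma Q_of_derive (t : R) : 0 < t -> is_derive (Q_of A L w) t (Q1_of A L1 w t).
Proof.
  intros Ht. pose proof (sqrt_lt_R0 t Ht) as Hr.
  pose proof (modulus_is_derive w Hw (sqrt t) Hr) as Hd.
  pose proof (profile_derive _ _ _ _ HL (w (sqrt t)) (Hw_pos _ Hr)) as HLd.
  unfold Q_of, Q1_of. auto_derive.
  - repeat split; first [exists (L1 (w (sqrt t))); exact HLd | exists (Derive w (sqrt t)); exact Hd | lra].
  - rewrite (Derive_eta_unique L _ _ HLd), (Derive_eta_unique w _ _ Hd). field. lra.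
Qed.

Lemma Q1_of_derive (t : R) : 0 < t -> is_derive (Q1_of A L1 w) t (Q2_of A L1 L2 w t).
Proof.
  intros Ht. pose proof (sqrt_lt_R0 t Ht) as Hr. pose proof (sqrt_sqrt t ltac:(lra)) as Hrr.
  pose proof (modulus_is_derive w Hw (sqrt t) Hr) as Hd.
  pose proof (modulus_is_derive2 w Hw (sqrt t) Hr) as Hd2.
  pose proof (profile_derive1 _ _ _ _ HL (w (sqrt t)) (Hw_pos _ Hr)) as HL1d.
  unfold Q1_of, Q2_of. auto_derive.
  - repeat split; first [exists (L2 (w (sqrt t))); exact HL1d | exists (Derive w (sqrt t)); exact Hd
      | exists (Derive_n w 2 (sqrt t)); exact Hd2 | lra].
  - rewrite (Derive_eta_unique L1 _ _ HL1d), (Derive_eta_unique w _ _ Hd),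
      (Derive_eta_unique (Derive w) _ _ Hd2).
    set (r := sqrt t) in *. clearbody r. subst t. field. lra.
Qed.

Lemma Q2_of_continuous (t : R) : 0 < t -> continuous (Q2_of A L1 L2 w) t.
Proof.
  intros Ht. pose proof (sqrt_lt_R0 t Ht) as Hr.
  assert (cM : forall f h : R -> R, continuous f t -> continuous h t ->
    continuous (fun y => f y * h y) t) by (intros; now apply (continuous_mult f h)).
  assert (cP : forall f h : R -> R, continuous f t -> continuous h t ->
    continuous (fun y => f y + h y) t) by (intros; now apply (continuous_plus f h)).
  assert (cC : forall c : R, continuous (fun _ => c) t) by (intros; apply continuous_const).
  assert (cId : continuous (fun y => y) t) by apply continuous_id.
  assert (cS : continuous sqrt t)
    by (apply (continuous_sqrt_comp (fun y => y)); [exact Ht|apply continuous_id]).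
  assert (cW1 : continuous (fun y => Derive w (sqrt y)) t).
  { apply continuous_sqrt_comp, (ex_derive_continuous (V := R_NormedModule)); auto.
    exists (Derive_n w 2 (sqrt t)). now apply modulus_is_derive2. }
  assert (cW2 : continuous (fun y => Derive_n w 2 (sqrt y)) t)
    by (apply continuous_sqrt_comp, (modulus_derive2_cont w Hw); auto).
  assert (cLw : forall F : R -> R, (forall x, 0 < x -> continuous F x) ->
    continuous (fun y => F (w (sqrt y))) t).
  { intros F HF. apply (continuous_sqrt_comp (fun y => F (w y))); auto.
    apply (continuous_comp w F); [apply modulus_continuous|apply HF]; auto. }
  assert (cL1 : continuous (fun y => L1 (w (sqrt y))) t).
  { apply cLw. intros x Hx. apply (ex_derive_continuous (V := R_NormedModule)).
    exists (L2 x). now apply HL. }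
  assert (cL2 : continuous (fun y => L2 (w (sqrt y))) t) by (apply cLw; apply HL).
  assert (c2S : continuous (fun y => / (2 * sqrt y)) t)
    by (apply continuous_Rinv_comp; [apply (cM (fun _ => 2) sqrt); auto|lra]).
  assert (c4t : continuous (fun y => / (4 * y)) t)
    by (apply continuous_Rinv_comp; [apply (cM (fun _ => 4) (fun y => y)); auto|lra]).
  assert (c4tS : continuous (fun y => / (4 * y * sqrt y)) t).
  { apply continuous_Rinv_comp; [apply (cM (fun y => 4 * y) sqrt); auto; apply (cM (fun _ => 4)); auto|].
    pose proof (Rmult_lt_0_compat (4 * t) (sqrt t) ltac:(lra) Hr). lra. }
  assert (cD1 : continuous (fun y => Derive w (sqrt y) * / (2 * sqrt y)) t) by (apply cM; auto).
  unfold Q2_of.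
  apply (continuous_ext (fun y => A * (L2 (w (sqrt y)) * ((Derive w (sqrt y) * / (2 * sqrt y))
      * (Derive w (sqrt y) * / (2 * sqrt y))) + L1 (w (sqrt y)) * (Derive_n w 2 (sqrt y)
      * / (4 * y) + (-1) * (Derive w (sqrt y) * / (4 * y * sqrt y)))))).
  { intros y. unfold Rdiv. simpl. ring. }
  apply (cM (fun _ => A)); [apply cC|].
  apply (cP (fun y => L2 (w (sqrt y)) * ((Derive w (sqrt y) * / (2 * sqrt y))
                                         * (Derive w (sqrt y) * / (2 * sqrt y))))).
  - apply (cM (fun y => L2 (w (sqrt y)))); auto.
  - apply (cM (fun y => L1 (w (sqrt y)))); auto.
Qed.

Lemma Q_of_nonneg (t : R) : 0 < t -> 0 <= Q_of A L w t.
Proof.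
  intros Ht. unfold Q_of. apply Rmult_le_pos; [lra|].
  apply HL, Hw_pos, sqrt_lt_R0, Ht.
Qed.

Lemma Q_of_nondecr (x y : R) : 0 < x -> x <= y -> Q_of A L w x <= Q_of A L w y.
Proof.
  intros Hx Hxy. pose proof (sqrt_lt_R0 x Hx). unfold Q_of.
  apply Rmult_le_compat_l; [lra|].
  apply (profile_nondecr L L1 L2 cL HL); [now apply Hw_pos|].
  apply Hw; simpl; try lra; [pose proof (sqrt_pos y); lra|]. apply sqrt_le_1_alt; lra.
Qed.

(* [Q(t)/t = A (L(w r)/w r) (w r/r) (1/r)] with [r = sqrt t]: three nonincreasing factors. *)
Lemma Q_of_ratio_nonincr (x y : R) : 0 < x -> x <= y -> Q_of A L w y / y <= Q_of A L w x / x.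
Proof.
  intros Hx Hxy.
  pose proof (sqrt_lt_R0 x Hx) as S1. pose proof (sqrt_sqrt x ltac:(lra)) as S2.
  pose proof (sqrt_lt_R0 y ltac:(lra)) as T1. pose proof (sqrt_sqrt y ltac:(lra)) as T2.
  assert (Hs : sqrt x <= sqrt y) by (apply sqrt_le_1_alt; lra).
  pose proof (Hw_pos _ S1) as Px. pose proof (Hw_pos _ T1) as Py.
  assert (HwL : w (sqrt x) <= w (sqrt y)) by (apply Hw; simpl; lra).
  pose proof (profile_ratio_nonincr L L1 L2 cL HL _ _ Px HwL) as R1.
  pose proof (modulus_ratio_nonincr w Hw _ _ S1 Hs) as R2.
  assert (R3 : / sqrt y <= / sqrt x) by (apply Rinv_le_contravar; lra).
  assert (Hfac : forall r, 0 < r -> 0 < w r -> Q_of A L w (r * r) / (r * r)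
      = A * ((L (w r) / w r) * (w r / r) * / r)) by (intros r Hr Hwr; unfold Q_of;
      rewrite sqrt_square by lra; field; lra).
  rewrite <- S2, <- T2, !Hfac by lra.
  apply Rmult_le_compat_l; [lra|].
  assert (0 <= L (w (sqrt y)) / w (sqrt y)) by (apply Rdiv_le_0_compat; [apply HL|]; lra).
  assert (0 <= w (sqrt y) / sqrt y) by (apply Rdiv_le_0_compat; lra).
  assert (0 <= / sqrt y) by (left; apply Rinv_0_lt_compat; lra).
  apply Rmult_le_compat; try lra; [apply Rmult_le_pos; lra|apply Rmult_le_compat; lra].
Qed.

Lemma Q1_of_le (t : R) : 0 < t -> t * Q1_of A L1 w t <= Q_of A L w t.
Proof.
  intros Ht. pose proof (sqrt_lt_R0 t Ht) as S1. pose proof (sqrt_sqrt t ltac:(lra)) as S2.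
  pose proof (modulus_x_derive_le w Hw (sqrt t) S1) as X.
  pose proof (Hw_pos _ S1) as P.
  pose proof (profile_derive_nonneg _ _ _ _ HL _ P).
  pose proof (profile_x_derive_le _ _ _ _ HL _ P).
  pose proof (profile_bounds _ _ _ _ HL _ P).
  unfold Q_of, Q1_of.
  replace (t * (A * L1 (w (sqrt t)) * (Derive w (sqrt t) / (2 * sqrt t))))
    with (A * (L1 (w (sqrt t)) * (sqrt t * Derive w (sqrt t))) / 2)
    by (clear - S1 S2; set (r := sqrt t) in *; clearbody r; subst t; field; lra).
  assert (L1 (w (sqrt t)) * (sqrt t * Derive w (sqrt t)) <= L1 (w (sqrt t)) * w (sqrt t))
    by (apply Rmult_le_compat_l; lra).
  assert (A * (L1 (w (sqrt t)) * (sqrt t * Derive w (sqrt t))) <= A * L (w (sqrt t)))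
    by (apply Rmult_le_compat_l; lra).
  assert (0 <= A * L (w (sqrt t))) by (apply Rmult_le_pos; lra). lra.
Qed.

(* With [v = sqrt t]: [t^2 Q2(t) = A (L2(w v) h^2 + L1(w v) (v^2 w''(v) - v w'(v)) / 4)],
   [h = v w'(v) / 2], and condition (M) bounds [v^2 w'' - v w'] below by [- 5 w(v)]. *)
Lemma Q2_of_lower : exists c t1, 0 < c /\ 0 < t1 < 1 /\
  forall t, 0 < t < t1 -> - c * Q_of A L w t <= t ^ 2 * Q2_of A L1 L2 w t.
Proof.
  destruct Hw_second as [t0 [Ht0 Hw2]].
  pose proof (profile_cL_pos _ _ _ _ HL).
  exists (cL / 4 + 5 / 4), (Rmin (1/2) (t0 * t0)).
  assert (Hm1 : Rmin (1/2) (t0 * t0) <= 1/2) by apply Rmin_l.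
  assert (Hm2 : Rmin (1/2) (t0 * t0) <= t0 * t0) by apply Rmin_r.
  assert (Hm : 0 < Rmin (1/2) (t0 * t0)) by (apply Rmin_pos; nra).
  split; [lra|]. split; [lra|]. intros t Ht.
  pose proof (sqrt_lt_R0 t ltac:(lra)) as S1. pose proof (sqrt_sqrt t ltac:(lra)) as S2.
  set (v := sqrt t) in *.
  assert (Hv : v < t0) by (destruct (Rlt_or_le v t0); auto; nra).
  specialize (Hw2 v ltac:(lra)).
  pose proof (modulus_x_derive_le w Hw v S1). pose proof (modulus_derive_nonneg w Hw v S1).
  pose proof (Hw_pos v S1).
  replace (t ^ 2 * Q2_of A L1 L2 w t) with (A * (L2 (w v) * (v * Derive w v / 2) ^ 2
     + L1 (w v) * ((v ^ 2 * Derive_n w 2 v - v * Derive w v) / 4)))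
    by (unfold Q2_of; fold v; rewrite <- S2; field; lra).
  apply profile_chain_lower; auto; [split; [apply Rmult_le_pos; [apply Rmult_le_pos|]|]; lra|].
  simpl in Hw2 |- *. lra.
Qed.

Lemma zw_of_log_bound : exists B, forall t, 0 < t -> zw_of A L w t <= B + B * ln (1 + t).
Proof.
  exists (2 * A * (Rabs (int0 g) + 1)). intros t Ht.
  pose proof (sqrt_lt_R0 t Ht) as S1. rewrite zw_of_pos by lra.
  pose proof (prim0_le_log g integrand_continuous integrand_nonneg Hint (sqrt t)
                integrand_le_inv S1).
  pose proof (ln_1p_sqrt_le t Ht). pose proof (Rle_abs (int0 g)). pose proof (Rabs_pos (int0 g)).
  assert (0 <= ln (1 + t)) by (rewrite <- ln_1; apply ln_le; lra).
  assert (prim0 g (sqrt t) <= (Rabs (int0 g) + 1) + (Rabs (int0 g) + 1) * ln (1 + t)) by nra.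
  replace (2 * A * (Rabs (int0 g) + 1) + 2 * A * (Rabs (int0 g) + 1) * ln (1 + t))
    with (2 * A * ((Rabs (int0 g) + 1) + (Rabs (int0 g) + 1) * ln (1 + t))) by ring.
  apply Rmult_le_compat_l; lra.
Qed.

Lemma construction_zeta_data :
  zeta_data (zw_of A L w) (Q_of A L w) (Q1_of A L1 w) (Q2_of A L1 L2 w).
Proof.
  split.
  - exact zw_of_nonpos.
  - exact zw_of_cont0.
  - exact zw_of_derive.
  - exact Q_of_derive.
  - exact Q1_of_derive.
  - exact Q2_of_continuous.
  - exact Q_of_nonneg.
  - exact Q_of_nondecr.
  - exact Q_of_ratio_nonincr.
  - exact Q1_of_le.
  - exact Q2_of_lower.
  - exact zw_of_log_bound.
Qed.

End Construction.

Section Integrability.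

Variables (iota : R) (w : R -> R).
Hypothesis HM : cond_M iota w.
Hypothesis Hw_pos : forall x, 0 < x -> 0 < w x.

Let Hw : modulus w := modulus_of_cond_M iota w HM.

Lemma modulus_le_at1 (v : R) : 0 < v <= 1 -> w v <= w 1.
Proof. intros Hv. apply Hw; simpl; lra. Qed.

Lemma w_over_t_nonneg (v : R) : 0 < v <= 1 -> 0 <= w v / v.
Proof. intros Hv. apply Rdiv_le_0_compat; [apply Hw|]; lra. Qed.

Lemma w_over_t_integrable : ex_RInt_gen (fun t => w t / t) (at_right 0) (at_point 1).
Proof. pose proof HM as (_ & _ & _ & _ & _ & _ & E & _). exact E. Qed.

Lemma integrand_lin_bounded : partial_integrals_bounded (integrand profile_lin w).
Proof.
  apply (partial_integrals_bounded_of_dominated _ (fun t => w t / t) (fun t => w t / t) 0 1);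
    try lra; auto using w_over_t_nonneg, w_over_t_integrable.
  - exact (integrand_continuous w _ _ _ 2 Hw Hw_pos profile_lin_profile).
  - intros v Hv. unfold integrand, profile_lin. specialize (Hw_pos v ltac:(lra)).
    rewrite Rmult_0_l, Rplus_0_l, Rmult_1_l.
    apply Rmult_le_compat_r; [left; apply Rinv_0_lt_compat; lra|].
    apply Rmult_le_reg_r with (1 + w v); [lra|]. field_simplify; nra.
Qed.

(* [L(x) <= x^(2 s0) = x x^(2 s0 - 1)], and the Dini integrand is
   [w/t (w^(2 s0 - 1) - w(1)^(2 s0 - 1)) / (1 - 2 s0)]. *)
Lemma integrand_pow_bounded (s0 : R) : 0 < s0 < 1/2 -> dini2s s0 w ->
  partial_integrals_bounded (integrand (profile_pow (2 * s0)) w).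
Proof.
  intros Hs0 [Hd _]. set (a := 2 * s0). assert (Ha : 0 < a < 1) by (unfold a; lra).
  set (b := Rpower (w 1) (2 * s0 - 1)).
  assert (Hb : 0 <= b) by (left; apply exp_pos).
  apply (partial_integrals_bounded_of_dominated _
           (fun t => w t / t * ((Rpower (w t) (2 * s0 - 1) - b) / (1 - 2 * s0)))
           (fun t => w t / t) (1 - 2 * s0) b); try lra;
    auto using w_over_t_nonneg, w_over_t_integrable.
  - exact (integrand_continuous w _ _ _ 2 Hw Hw_pos (profile_pow_profile a Ha)).
  - intros v Hv. pose proof (Hw_pos v ltac:(lra)). pose proof (modulus_le_at1 v Hv).
    apply Rmult_le_pos; [apply Rdiv_le_0_compat; lra|].
    apply Rdiv_le_0_compat; [|lra]. unfold b, Rpower.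
    assert (ln (w v) <= ln (w 1)) by (apply ln_le; lra).
    destruct (Req_dec ((2 * s0 - 1) * ln (w 1)) ((2 * s0 - 1) * ln (w v))) as [Eq|Ne];
      [rewrite Eq; lra|].
    pose proof (exp_increasing ((2 * s0 - 1) * ln (w 1)) ((2 * s0 - 1) * ln (w v)) ltac:(nra)).
    lra.
  - apply Hd. lra.
  - intros v Hv. pose proof (Hw_pos v ltac:(lra)) as Hx. unfold integrand.
    set (x := w v) in *.
    assert (Hle : profile_pow a x <= Rpower x a).
    { unfold profile_pow, Rpower. destruct (ln1p_ge x Hx).
      destruct (Req_dec (a * (ln x - ln (1 + x))) (a * ln x)) as [Eq|Ne]; [rewrite Eq; lra|].
      left. apply exp_increasing. nra. }
    assert (Ex : Rpower x a = x * Rpower x (2 * s0 - 1)).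
    { unfold a. replace (2 * s0) with (1 + (2 * s0 - 1)) at 1 by ring.
      rewrite Rpower_plus, Rpower_1 by lra. reflexivity. }
    apply Rle_trans with (Rpower x a / v).
    { apply Rmult_le_compat_r; [left; apply Rinv_0_lt_compat; lra| exact Hle]. }
    right. rewrite Ex. field. lra.
Qed.

Lemma integrand_log_bounded : dini2s (1/2) w ->
  partial_integrals_bounded (integrand profile_log w).
Proof.
  intros [_ Hd].
  assert (Hw1 : 0 < w 1) by (apply Hw_pos; lra).
  set (b := 1 + w 1 + Rabs (ln (w 1))).
  assert (Hb : 0 <= b) by (unfold b; pose proof (Rabs_pos (ln (w 1))); lra).
  apply (partial_integrals_bounded_of_dominated _ (fun t => w t / t * ln (w 1 / w t))
           (fun t => w t / t) 1 b); try lra; auto using w_over_t_nonneg, w_over_t_integrable.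
  - exact (integrand_continuous w _ _ _ 3 Hw Hw_pos profile_log_profile).
  - intros v Hv. pose proof (Hw_pos v ltac:(lra)). pose proof (modulus_le_at1 v Hv).
    apply Rmult_le_pos; [apply Rdiv_le_0_compat; lra|].
    rewrite <- ln_1. apply ln_le; [lra|].
    apply Rmult_le_reg_r with (w v); [lra|]. field_simplify; lra.
  - intros v Hv. pose proof (Hw_pos v ltac:(lra)) as Hx. pose proof (modulus_le_at1 v Hv) as Hx1.
    unfold integrand. set (x := w v) in *. set (w1 := w 1) in *.
    destruct (ln1p_ge x Hx).
    assert (Hl1 : ln (1 + x) <= x).
    { pose proof (exp_ineq1_le x). rewrite <- (ln_exp x) at 2. apply ln_le; lra. }
    assert (Hdv : ln (w1 / x) = ln w1 - ln x) by (apply ln_div; lra).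
    assert (x / (1 + x) <= x).
    { apply Rmult_le_reg_r with (1 + x); [lra|]. field_simplify; nra. }
    assert (Hle : profile_log x <= x * ln (w1 / x) + b * x).
    { unfold profile_log, b. pose proof (Rle_abs (- ln w1)) as Hab. rewrite Rabs_Ropp in Hab.
      assert (x / (1 + x) * (1 + ln (1 + x) - ln x) <= x * (1 + ln (1 + x) - ln x))
        by (apply Rmult_le_compat_r; lra).
      rewrite Hdv. nra. }
    replace (1 * (x / v * ln (w1 / x)) + b * (x / v)) with ((x * ln (w1 / x) + b * x) / v)
      by (field; lra).
    apply Rmult_le_compat_r; [left; apply Rinv_0_lt_compat; lra| exact Hle].
Qed.

End Integrability.

Lemma rpow_le_of_exponent_le (x a b : R) : 0 < x <= 1 -> a <= b -> Rpower x b <= Rpower x a.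
Proof.
  intros Hx Hab. unfold Rpower.
  assert (ln x <= 0) by (rewrite <- ln_1; apply ln_le; lra).
  destruct (Req_dec (b * ln x) (a * ln x)) as [->|]; [lra|].
  left. apply exp_increasing. nra.
Qed.

Lemma profile_scale (L L1 L2 : R -> R) (cL x K : R) :
  profile L L1 L2 cL -> 0 < x -> 1 <= K -> L (K * x) <= K * L x.
Proof.
  intros HL Hx HK.
  pose proof (profile_ratio_nonincr L L1 L2 cL HL x (K * x) Hx ltac:(nra)).
  apply Rmult_le_reg_r with (/ (K * x)); [apply Rinv_0_lt_compat; nra|].
  replace (K * L x * / (K * x)) with (L x / x) by (field; lra). exact H.
Qed.

Lemma preimage_le_sqrt (w : R -> R) (c0 iota t u : R) :
  0 < c0 -> 0 < iota < 1 -> 0 < u <= 1 -> c0 * Rpower u iota <= w u -> u * w u = t ->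
  u <= sqrt t / sqrt c0.
Proof.
  intros Hc0 Hi Hu Hlow Hut.
  pose proof (rpow_le_of_exponent_le u iota 1 Hu ltac:(lra)). rewrite Rpower_1 in H by lra.
  assert (c0 * u <= w u) by nra.
  assert (c0 * (u * u) <= t) by (rewrite <- Hut; nra).
  assert (Hsc : 0 < sqrt c0) by (apply sqrt_lt_R0; lra).
  apply Rmult_le_reg_r with (sqrt c0); [lra|].
  replace (sqrt t / sqrt c0 * sqrt c0) with (sqrt t) by (field; lra).
  rewrite <- (sqrt_square u) at 1 by lra. rewrite <- sqrt_mult by nra.
  apply sqrt_le_1_alt. rewrite Rmult_comm. exact H1.
Qed.

Section LowerBound.

Variables (s0 iota C : R) (w L L1 L2 : R -> R) (cL cg : R).
Hypothesis Hiota : 0 < iota < s0.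
Hypothesis Hs0 : s0 < 1.
Hypothesis HC : 0 < C.
Hypothesis Hw : modulus w.
Hypothesis Hw_pos : forall x, 0 < x -> 0 < w x.
Hypothesis HL : profile L L1 L2 cL.
Hypothesis HS : dominates_gauges s0 L cg.

Variables (t1 c0 : R).
Hypothesis Ht1 : 0 < t1 < 1.
Hypothesis Hc0 : 0 < c0.
Hypothesis Hw_le1 : forall y, 0 < y <= t1 -> w y <= 1.
Hypothesis Hlow : forall v, 0 < v <= t1 -> c0 * Rpower v iota <= w v.

Let K := 1 + / sqrt c0.

(* With [r = sqrt t]: [t^s <= r^iota <= w(r)/c0], [w(t) <= w(r)], and since [u <= K r],
   [L(w(u)) <= L(K w(r)) <= K L(w(r))]; everything is a multiple of [L(w(r)) >= w(r)/cg]. *)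
Lemma lower_bound_pointwise (s t u G : R) :
  s0 <= s < 1 -> 0 < t -> sqrt t < t1 -> 0 < u <= t1 -> u * w u = t ->
  G <= cg * L (w u) ->
  C * (Rpower t s + w t + G) <= C * cg * (/ c0 + 1 + K) * L (w (sqrt t)).
Proof.
  intros Hs Ht Hr Hu Hut HG.
  pose proof (sqrt_lt_R0 t Ht) as S1. pose proof (sqrt_sqrt t ltac:(lra)) as S2.
  set (r := sqrt t) in *. set (X := w r).
  pose proof (dominates_cg_pos _ _ _ HS).
  assert (HX : 0 < X <= 1) by (split; [apply Hw_pos|apply Hw_le1]; lra).
  assert (HLX : 0 <= L X) by (apply HL; lra).
  assert (Hsc : 0 < sqrt c0) by (apply sqrt_lt_R0; lra).
  assert (HK : 1 <= K) by (unfold K; pose proof (Rinv_0_lt_compat _ Hsc); lra).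
  assert (Hur : u <= K * r).
  { pose proof (preimage_le_sqrt w c0 iota t u Hc0 ltac:(lra) ltac:(lra)
                  ltac:(apply Hlow; lra) Hut).
    unfold K. fold r in H0. replace ((1 + / sqrt c0) * r) with (r + r / sqrt c0) by (field; lra).
    lra. }
  assert (HLY : L (w u) <= K * L X).
  { apply Rle_trans with (L (K * X)); [|apply (profile_scale L L1 L2 cL); auto; lra].
    apply (profile_nondecr L L1 L2 cL HL); [apply Hw_pos; lra|].
    apply Rle_trans with (w (K * r)); [apply Hw; simpl; nra|apply modulus_scale; auto; lra]. }
  assert (Hts : Rpower t s <= X / c0).
  { rewrite <- S2, <- Rpower_mult_distr, <- Rpower_plus by lra.
    replace (s + s) with (2 * s) by ring.
    apply Rle_trans with (Rpower r iota); [apply rpow_le_of_exponent_le; lra|].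
    apply Rmult_le_reg_l with c0; [lra|]. replace (c0 * (X / c0)) with X by (field; lra).
    apply Hlow. lra. }
  assert (Hwt : w t <= X) by (apply Hw; simpl; nra).
  pose proof (dominates_id _ _ _ HS X HX).
  assert (X / c0 <= cg * / c0 * L X).
  { unfold Rdiv. replace (cg * / c0 * L X) with ((cg * L X) * / c0) by ring.
    apply Rmult_le_compat_r; [left; apply Rinv_0_lt_compat|]; lra. }
  assert (cg * L (w u) <= cg * (K * L X)) by (apply Rmult_le_compat_l; lra).
  replace (C * cg * (/ c0 + 1 + K) * L X)
    with (C * (cg * / c0 * L X + cg * L X + cg * (K * L X))) by ring.
  apply Rmult_le_compat_l; lra.
Qed.

End LowerBound.

Lemma cond_M_le1_near0 (iota : R) (w : R -> R) : cond_M iota w ->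
  exists d, 0 < d /\ forall y, 0 <= y < d -> w y <= 1.
Proof.
  intros (Hc & _ & _ & _ & _ & H0 & _).
  destruct (Hc 0 (Rle_refl 0) (ball (w 0) (mkposreal 1 Rlt_0_1)) (locally_ball _ _))
    as [[d Hd0] Hd].
  exists d. split; [exact Hd0|]. intros y Hy.
  assert (Hb : ball 0 d y) by (apply Rabs_def1; simpl; unfold minus, plus, opp; simpl; lra).
  specialize (Hd y Hb ltac:(simpl; lra)). apply Rabs_def2 in Hd. simpl in Hd.
  unfold minus, plus, opp in Hd; simpl in Hd. rewrite H0 in Hd. lra.
Qed.

Lemma rpow_lower_of_ratio_nonincr (w : R -> R) (iota t0 t1 : R) :
  nonincr_on (fun t => w t / Rpower t iota) (fun t => 0 < t < t0) -> 0 < t1 < t0 ->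
  forall v, 0 < v <= t1 -> w t1 / Rpower t1 iota * Rpower v iota <= w v.
Proof.
  intros Hni Ht1 v Hv. pose proof (Hni v t1 ltac:(simpl; lra) ltac:(simpl; lra) ltac:(lra)) as H.
  simpl in H. assert (0 < Rpower v iota) by apply exp_pos.
  assert (0 < Rpower t1 iota) by apply exp_pos.
  apply Rmult_le_reg_r with (/ Rpower v iota); [apply Rinv_0_lt_compat; lra|].
  replace (w t1 / Rpower t1 iota * Rpower v iota * / Rpower v iota)
    with (w t1 / Rpower t1 iota) by (field; lra).
  exact H.
Qed.

Lemma cond_M_small_scale (iota : R) (w : R -> R) :
  cond_M iota w -> (forall x, 0 < x -> 0 < w x) ->
  exists t1 c0, 0 < t1 < 1 /\ 0 < c0 /\ (forall y, 0 < y <= t1 -> w y <= 1) /\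
    forall v, 0 < v <= t1 -> c0 * Rpower v iota <= w v.
Proof.
  intros HM Hw_pos.
  destruct (cond_M_le1_near0 iota w HM) as [d [Hd Hd1]].
  pose proof HM as (_ & _ & _ & _ & _ & _ & _ & _ & [tM [HtM [Hni _]]]).
  set (t1 := Rmin (Rmin (d / 2) (tM / 2)) (1/2)).
  assert (Ht1 : 0 < t1 /\ t1 <= d / 2 /\ t1 <= tM / 2 /\ t1 <= 1/2).
  { unfold t1. pose proof (Rmin_l (Rmin (d / 2) (tM / 2)) (1/2)).
    pose proof (Rmin_r (Rmin (d / 2) (tM / 2)) (1/2)).
    pose proof (Rmin_l (d / 2) (tM / 2)). pose proof (Rmin_r (d / 2) (tM / 2)).
    split; [repeat apply Rmin_pos|]; lra. }
  exists t1, (w t1 / Rpower t1 iota).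
  split; [lra|]. split; [apply Rdiv_lt_0_compat; [apply Hw_pos; lra|apply exp_pos]|].
  split; [intros y Hy; apply Hd1; lra|].
  apply (rpow_lower_of_ratio_nonincr w iota tM t1 Hni). lra.
Qed.

Lemma profile_lower_bound (s0 iota C : R) (w L L1 L2 : R -> R) (cL cg : R) :
  0 < iota < s0 -> s0 < 1 -> 0 < C -> cond_M iota w -> (forall x, 0 < x -> 0 < w x) ->
  profile L L1 L2 cL -> dominates_gauges s0 L cg ->
  exists t0 A, 0 < t0 /\ 0 <= A /\
    forall s t u, s0 <= s < 1 -> 0 < t < t0 -> 0 <= u -> u * w u = t ->
      (s <> 1/2 -> C * (Rpower t s + w t + gauge s (w u)) <= A * L (w (sqrt t))) /\
      (s = 1/2 -> C * (Rpower t (1/2) + w t + w u * ln (1 / w u)) <= A * L (w (sqrt t))).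
Proof.
  intros Hiota Hs0 HC HM Hw_pos HL HS.
  pose proof (modulus_of_cond_M iota w HM) as Hw.
  destruct (cond_M_small_scale iota w HM Hw_pos) as (t1 & c0 & Ht1 & Hc0 & Hle1 & Hlow).
  pose proof (lower_bound_pointwise s0 iota C w L L1 L2 cL cg ltac:(lra) Hs0 HC Hw Hw_pos HL HS
                t1 c0 Ht1 Hc0 Hle1 Hlow) as Hpt.
  assert (Hwt1 : 0 < w t1) by (apply Hw_pos; lra).
  pose proof (dominates_cg_pos _ _ _ HS) as Hcg.
  pose proof (Rinv_0_lt_compat _ (sqrt_lt_R0 c0 Hc0)). pose proof (Rinv_0_lt_compat _ Hc0).
  exists (Rmin (t1 * t1) (t1 * w t1)), (C * cg * (/ c0 + 1 + (1 + / sqrt c0))).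
  pose proof (Rmin_l (t1 * t1) (t1 * w t1)). pose proof (Rmin_r (t1 * t1) (t1 * w t1)).
  split; [apply Rmin_pos; nra|]. split; [apply Rmult_le_pos; [apply Rmult_le_pos|]; lra|].
  intros s t u Hs Ht Hu Hut.
  pose proof (sqrt_lt_R0 t ltac:(lra)) as S1. pose proof (sqrt_sqrt t ltac:(lra)) as S2.
  assert (Hr : sqrt t < t1) by (destruct (Rlt_or_le (sqrt t) t1); auto; nra).
  assert (Hu0 : 0 < u) by (destruct (Req_dec u 0) as [->|]; [rewrite Rmult_0_l in Hut|]; lra).
  assert (Hut1 : u <= t1).
  { destruct (Rle_or_lt u t1) as [|Hgt]; auto.
    assert (w t1 <= w u) by (apply Hw; simpl; lra). nra. }
  assert (HY : 0 < w u <= 1) by (split; [apply Hw_pos|apply Hle1]; lra).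
  split; intros Hs2.
  - apply (Hpt s t u); auto; try lra. apply (dominates_gauge _ _ _ HS); auto.
  - subst s. apply (Hpt (1/2) t u); auto; try lra. apply (dominates_xlog _ _ _ HS); auto; lra.
Qed.

Lemma zero_zeta_data : zeta_data (fun _ => 0) (fun _ => 0) (fun _ => 0) (fun _ => 0).
Proof.
  split.
  - reflexivity.
  - apply continuity_pt_const. intros x y. reflexivity.
  - intros t Ht. replace (0 / t) with 0 by (unfold Rdiv; ring). auto_derive; auto.
  - intros t Ht. auto_derive; auto.
  - intros t Ht. auto_derive; auto.
  - intros t Ht. apply continuous_const.
  - intros t Ht. lra.
  - intros x y Hx Hxy. lra.
  - intros x y Hx Hxy. unfold Rdiv. rewrite !Rmult_0_l. lra.
  - intros t Ht. lra.
  - exists 1, (1/2). repeat split; intros; lra.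
  - exists 0. intros. lra.
Qed.

Lemma exists_dominating_profile (s0 iota : R) (w : R -> R) :
  0 < s0 < 1 -> cond_M iota w -> dini2s s0 w -> (forall x, 0 < x -> 0 < w x) ->
  exists L L1 L2 cL cg, profile L L1 L2 cL /\ dominates_gauges s0 L cg /\
    partial_integrals_bounded (integrand L w).
Proof.
  intros Hs0 HM HD Hw_pos. destruct (Rtotal_order s0 (1/2)) as [Hlt|[->|Hgt]].
  - exists (profile_pow (2 * s0)), (profile_pow' (2 * s0)), (profile_pow'' (2 * s0)), 2,
      (2 + 4 / (1 - 2 * s0)).
    split; [apply profile_pow_profile; lra|].
    split; [apply profile_pow_dominates; lra|]. apply (integrand_pow_bounded iota); auto; lra.
  - exists profile_log, profile_log', profile_log'', 3, 2.
    split; [exact profile_log_profile|]. split; [exact profile_log_dominates|].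
    now apply (integrand_log_bounded iota).
  - exists profile_lin, profile_lin', profile_lin'', 2, (2 + 2 / (2 * s0 - 1)).
    split; [exact profile_lin_profile|]. split; [now apply profile_lin_dominates|].
    now apply (integrand_lin_bounded iota).
Qed.

Lemma cond_M_second_derivative (iota : R) (w : R -> R) : cond_M iota w ->
  exists t0, 0 < t0 /\
    forall t, 0 < t < t0 -> t ^ 2 * Derive_n w 2 t >= - w t - 3 * t * Derive w t.
Proof.
  intros (_ & _ & _ & _ & _ & _ & _ & _ & [t0 [Ht0 [_ H]]]). now exists t0.
Qed.

Lemma zeta_of_construction (s iota A : R) (w L L1 L2 : R -> R) (cL : R) :
  0 < s -> cond_M iota w -> (forall x, 0 < x -> 0 < w x) -> profile L L1 L2 cL -> 0 <= A ->
  partial_integrals_bounded (integrand L w) ->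
  zeta_admissible s (zeta_of (zw_of A L w)) /\
  forall t, 0 < t -> A * L (w (sqrt t)) <= t * Derive (zeta_of (zw_of A L w)) t.
Proof.
  intros Hs HM Hw_pos HL HA Hint.
  pose proof (construction_zeta_data w L L1 L2 cL A (modulus_of_cond_M iota w HM) Hw_pos
                (cond_M_second_derivative iota w HM) HL HA Hint) as HZ.
  split; [now apply (zeta_of_data_admissible _ _ _ _ HZ)|].
  intros t Ht. rewrite (t_Derive_zeta _ _ _ _ HZ t Ht).
  assert (0 <= t / (1 + t)) by (apply Rdiv_le_0_compat; lra).
  unfold Q_of. lra.
Qed.

Theorem lemma5p7 (s0 iota : R) (w : R -> R) (C : R) :
  0 < s0 < 1 ->
  0 < iota -> iota < Rmin s0 (1/3) ->
  cond_M iota w ->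
  dini2s s0 w ->
  0 < C ->
  exists t0, 0 < t0 /\
    forall s, s0 <= s < 1 ->
      exists z : R -> R,
        (forall t, 0 <= t -> 0 <= z t) /\
        cont_on_nonneg z /\
        Ck_on 2 z (fun t => 0 < t) /\
        Ck_on 3 z (fun t => 0 < t < 2) /\
        condZ0 z /\ condZ1 z /\ condZ2 z /\ condZ3 z /\ condZ4 s z /\
        (* u plays the role of f^{-1}(t), where f(u) = u * w(u) *)
        (forall t u, 0 < t < t0 -> 0 <= u -> u * w u = t ->
           (s <> 1/2 ->
              C * (Rpower t s + w t + (Rpower (w u) (2*s) - w u) / (1 - 2*s))
                <= t * Derive z t) /\
           (s = 1/2 ->
              C * (Rpower t (1/2) + w t + w u * ln (1 / w u))
                <= t * Derive z t)).
Proof.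
  intros Hs0 Hi Hi2 HM HD HC.
  assert (Hiota : iota < s0) by (pose proof (Rmin_l s0 (1/3)); lra).
  destruct (modulus_zero_or_pos w (modulus_of_cond_M iota w HM)) as [Hzero|Hw_pos].
  - exists 1. split; [lra|]. intros s Hs. exists (zeta_of (fun _ => 0)).
    destruct (zeta_of_data_admissible _ _ _ _ zero_zeta_data s ltac:(lra))
      as (P1 & P2 & P3 & P4 & P5 & P6 & P7 & P8 & P9).
    repeat (split; [assumption|]).
    intros t u Ht Hu Hut. rewrite (Hzero u Hu), Rmult_0_r in Hut. lra.
  - destruct (exists_dominating_profile s0 iota w Hs0 HM HD Hw_pos)
      as (L & L1 & L2 & cL & cg & HL & HS & Hint).
    destruct (profile_lower_bound s0 iota C w L L1 L2 cL cg ltac:(lra) ltac:(lra) HC HM Hw_pos HL HS)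
      as (t0 & A & Ht0 & HA & Hlow).
    exists t0. split; [exact Ht0|]. intros s Hs. exists (zeta_of (zw_of A L w)).
    destruct (zeta_of_construction s iota A w L L1 L2 cL ltac:(lra) HM Hw_pos HL HA Hint)
      as ((P1 & P2 & P3 & P4 & P5 & P6 & P7 & P8 & P9) & Hder).
    repeat (split; [assumption|]).
    intros t u Ht Hu Hut. specialize (Hder t ltac:(lra)).
    destruct (Hlow s t u Hs Ht Hu Hut) as [H1 H2]. unfold gauge in H1.
    split; intros Hs2; [specialize (H1 Hs2) | specialize (H2 Hs2)]; lra.
Qed.
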